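(* Fix $X=x$ and $\tau\in(0,1)$ (suppressed in notation). Suppose $D$ has support $\{0,1\}$ and $Z$ has support $\{0,1\}$, and for $y=(y_0,y_1)'\in\mathbb R^2$ define $$\Pi(y):=\big(P[Y\le y_D\mid Z=0]-\tau,\; P[Y\le y_D\mid Z=1]-\tau\big)',\qquad y_D:=(1-D)y_0+Dy_1 .$$ Let $q=(q(0),q(1))'$ satisfy $\Pi(q)=0$. Assume the conditional density $f_Y(y\mid D=d,Z=z)$ exists for each $y\in\mathbb R$ and $(d,z)\in\{0,1\}^2$, and that the Jacobian of $\Pi$ exists and equals $$\partial\Pi(y)=\begin{pmatrix} f_{Y,D}(y_0,0\mid Z=0) & f_{Y,D}(y_1,1\mid Z=0)\\ f_{Y,D}(y_0,0\mid Z=1) & f_{Y,D}(y_1,1\mid Z=1)\end{pmatrix},$$ where $f_{Y,D}(y,d\mid Z=z):=f_Y(y\mid D=d,Z=z)\,P[D=d\mid Z=z]$. (i) (Local) If $\partial\Pi$ is continuous and has full rank at $y=q$, then $q$ is identified in some sufficiently small open neighborhood $\mathcal L$ of $q$ in $\mathbb R^2$, i.e. $y=q$ is the only solution of $\Pi(y)=0$ in $\mathcal L$. (ii) (Global) Let $\mathcal L\subseteq\mathbb R^2$ contain $q$ and be covered by finitely many compact convex 2-dimensional polytopes $\{\mathcal L_j\}$, each containing $q$. Assume that for each $j$, $\partial\Pi$ is a $C^1$ Jacobian of $\Pi:\mathcal L_j\to\mathbb R^2$, and that, possibly after a (fixed) rearrangement of the two components of $\Pi$ (i.e. of the rows of $\partial\Pi$),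 for each $y\in\mathcal L_j$ and each subspace $L\subseteq\mathbb R^2$ spanned by a face of $\mathcal L_j$ that contains $y$, the linear map $\mathrm{proj}_L\circ\partial\Pi(y):L\to L$ has positive determinant. Then $y=q$ is the only solution of $\Pi(y)=0$ in $\mathcal L$.
   Context: A convex compact polytope is a bounded intersection of finitely many closed half-spaces; it is of full dimension in $\mathbb R^l$ if it has nonempty interior. A face of a polytope $\mathcal L$ is the intersection of $\mathcal L$ with any supporting hyperplane of $\mathcal L$ (so $\mathcal L$ itself is a face). The subspace spanned by a nonempty face is the translation to the origin of the minimal affine subspace containing that face. For a non-null subspace $L\subseteq\mathbb R^l$, $\mathrm{proj}_L$ is the orthogonal projection onto $L$; determinants of maps $L\to L$ are taken in coordinates of $L$. Faces spanning the null subspace (vertices) impose no condition. *)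

From Stdlib Require Import Reals List.
Open Scope R_scope.

(* Points of R^2 and 2x2 matrices (given by their two rows). *)
Definition R2 := (R * R)%type.
Definition mat2 := (R2 * R2)%type.

Definition dot (u v : R2) : R := fst u * fst v + snd u * snd v.
Definition vadd (u v : R2) : R2 := (fst u + fst v, snd u + snd v).
Definition vsub (u v : R2) : R2 := (fst u - fst v, snd u - snd v).
Definition vscal (t : R) (u : R2) : R2 := (t * fst u, t * snd u).
Definition mat_app (M : mat2) (v : R2) : R2 := (dot (fst M) v, dot (snd M) v).
Definition det2 (M : mat2) : R :=
  fst (fst M) * snd (snd M) - snd (fst M) * fst (snd M).
Definition swap_rows (M : mat2) : mat2 := (snd M, fst M).

(* sup-norm distances (induce the usual topology of R^2 / R^{2x2}) *)
Definition vnorm (u : R2) : R := Rmax (Rabs (fst u)) (Rabs (snd u)).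
Definition dist2 (u v : R2) : R := vnorm (vsub u v).
Definition mat_dist (M N : mat2) : R :=
  Rmax (dist2 (fst M) (fst N)) (dist2 (snd M) (snd N)).

(* ---------- the probabilistic model (X = x fixed) ----------
   Index d, z : bool, with false = 0, true = 1.
   p d z    = P[D = d | Z = z]
   F d z y  = P[Y <= y | D = d, Z = z]    (conditional CDF)
   f d z y  = f_Y(y | D = d, Z = z)      (conditional density)   *)

Definition is_cdf (G : R -> R) : Prop :=
  (forall a b, a <= b -> G a <= G b) /\
  (forall x eps, 0 < eps -> exists delta, 0 < delta /\
       forall t, x <= t < x + delta -> Rabs (G t - G x) < eps) /\
  (forall eps, 0 < eps -> exists M, forall t,
       (t <= - M -> Rabs (G t) < eps) /\ (M <= t -> Rabs (G t - 1) < eps)).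

Definition model (p : bool -> bool -> R) (F f : bool -> bool -> R -> R) : Prop :=
  (forall d z, 0 <= p d z) /\
  (forall z, p false z + p true z = 1) /\
  (* D has support {0,1} *)
  (forall d, exists z, 0 < p d z) /\
  (forall d z, is_cdf (F d z)) /\
  (* the conditional density exists at each y *)
  (forall d z y, derivable_pt_lim (F d z) y (f d z y)).

(* component z of Pi: P[Y <= y_D | Z = z] - tau, with y_D = (1-D) y_0 + D y_1,
   expanded by the law of total probability over D in {0,1}. *)
Definition Pi_comp (tau : R) (p : bool -> bool -> R) (F : bool -> bool -> R -> R)
  (z : bool) (y : R2) : R :=
  p false z * F false z (fst y) + p true z * F true z (snd y) - tau.

Definition Pi tau p F (y : R2) : R2 := (Pi_comp tau p F false y, Pi_comp tau p F true y).

Definition fYD (p : bool -> bool -> R) (f : bool -> bool -> R -> R) (t : R) (d z : bool) : R :=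
  f d z t * p d z.

Definition dPi p f (y : R2) : mat2 :=
  ((fYD p f (fst y) false false, fYD p f (snd y) true false),
   (fYD p f (fst y) false true,  fYD p f (snd y) true true)).

Definition is_jacobian (G : R2 -> R2) (y : R2) (M : mat2) : Prop :=
  forall eps, 0 < eps -> exists delta, 0 < delta /\ forall h,
    vnorm h < delta ->
    vnorm (vsub (vsub (G (vadd y h)) (G y)) (mat_app M h)) <= eps * vnorm h.

Definition cont_on (S : R2 -> Prop) (J : R2 -> mat2) : Prop :=
  forall y, S y -> forall eps, 0 < eps -> exists delta, 0 < delta /\
    forall u, S u -> dist2 u y < delta -> mat_dist (J u) (J y) < eps.

(* a finite family of closed half-spaces { y | a . y <= b } *)
Definition halfspaces := list (R2 * R).
Definition in_poly (H : halfspaces) (y : R2) : Prop :=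
  forall h, In h H -> dot (fst h) y <= snd h.

(* compact (closed by construction, bounded) convex polytope of full dimension *)
Definition is_polytope (H : halfspaces) : Prop :=
  (exists M, forall y, in_poly H y -> Rabs (fst y) <= M /\ Rabs (snd y) <= M) /\
  (exists y eps, 0 < eps /\ forall u, dist2 u y < eps -> in_poly H u).

Definition is_face (S Fc : R2 -> Prop) : Prop :=
  (forall y, Fc y <-> S y) \/
  exists a b, a <> (0, 0) /\ (forall y, S y -> dot a y <= b) /\
    (exists y, S y /\ dot a y = b) /\
    (forall y, Fc y <-> (S y /\ dot a y = b)).

(* the subspace spanned by Fc: linear span of the differences u - w, u, w in Fc
   (in R^2 every span is generated by two of the generators) *)
Definition span_face (Fc : R2 -> Prop) (v : R2) : Prop :=
  exists u1 w1 u2 w2 s t, Fc u1 /\ Fc w1 /\ Fc u2 /\ Fc w2 /\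
    v = vadd (vscal s (vsub u1 w1)) (vscal t (vsub u2 w2)).

(* det of proj_L o M : L -> L, computed in an orthonormal basis of L, is > 0.
   L = R^2: det M > 0;  L = R e with |e| = 1: e . (M e) > 0;  L = {0}: no condition. *)
Definition proj_det_pos (L : R2 -> Prop) (M : mat2) : Prop :=
  ((forall v, L v) -> 0 < det2 M) /\
  (forall e, dot e e = 1 -> (forall v, L v <-> exists t, v = vscal t e) ->
     0 < dot e (mat_app M e)).

(* Write Pi(y) = G(y) - (tau, tau) where
     G(s, t) = (g0 s + h0 t, g1 s + h1 t),   gz s = P[D=0|Z=z] F_{0z}(s),
                                             hz t = P[D=1|Z=z] F_{1z}(t),
   so G is a SEPARABLE map of the plane whose four scalar components are
   nondecreasing, with Jacobian dPi.

   (i) Local identification: by the mean value theorem applied to each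
   component, Pi(y) - Pi(q) = M (y - q) for a matrix M whose entries are values
   of dPi at points within |y - q| of q; by continuity M stays invertible near q.

   (ii) Global identification on a compact convex polygon H on which, after a
   possible swap of the rows, the diagonal entries and the determinant of dPi
   are positive and dPi is positive along each edge direction.  Two solutions
   that are ordered componentwise coincide by strict monotonicity of g0 and h1.
   For solutions x, y with fst x < fst y and snd y < snd x we follow, for s
   between fst x and fst y, the point of the vertical slice of H where
   G1 = G1 x (or the top/bottom of the slice when this level is not attained),
   and show by a real-induction argument that a Lagrangian
   G0 - r (G1 - G1 x), with a supporting multiplier r, strictly increases along
   this route; this contradicts G0 x = G0 y. *)

From Stdlib Require Import Reals List Lra Psatz Classical.
Open Scope R_scope.

Lemma derivable_cont_at (f : R -> R) x l : derivable_pt_lim f x l ->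
  forall eps, 0 < eps -> exists d, 0 < d /\ forall y, Rabs (y - x) < d -> Rabs (f y - f x) < eps.
Proof.
  intros Hf eps Heps.
  assert (Hcont : continuity_pt f x) by (apply derivable_continuous_pt; exists l; exact Hf).
  destruct (Hcont eps Heps) as [d [Hd Hclose]].
  exists d. split; [exact Hd|]. intros y Hy.
  destruct (Req_dec y x) as [->|Hne]; [rewrite Rminus_diag, Rabs_R0; exact Heps|].
  apply Hclose. split; [split; [exact I|congruence]| exact Hy].
Qed.

Lemma mvt_between (f f' : R -> R) x y : (forall c, derivable_pt_lim f c (f' c)) ->
  exists c, Rmin x y <= c <= Rmax x y /\ f y - f x = f' c * (y - x).
Proof.
  intros Hf. destruct (Rtotal_order x y) as [Lt|[Eq|Gt]].
  - destruct (MVT_cor2 f f' x y Lt (fun c _ => Hf c)) as [c [E Hc]].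
    exists c. rewrite Rmin_left, Rmax_right by lra. split; [lra|exact E].
  - subst. exists y. rewrite Rmin_left, Rmax_left by lra. split; [lra|ring].
  - destruct (MVT_cor2 f f' y x Gt (fun c _ => Hf c)) as [c [E Hc]].
    exists c. rewrite Rmin_right, Rmax_left by lra. split; [lra|].
    replace (f y - f x) with (- (f x - f y)) by ring. rewrite E. ring.
Qed.

Lemma deriv_nonneg_of_mono (F : R -> R) x l : (forall a b, a <= b -> F a <= F b) ->
  derivable_pt_lim F x l -> 0 <= l.
Proof.
  intros Hm Hd. destruct (Rle_or_lt 0 l) as [|Hl]; [assumption|exfalso].
  destruct (Hd (- l / 2)) as [d Hdd]; [lra|].
  pose proof (cond_pos d) as Hdpos.
  assert (Hq := Hdd (d / 2) ltac:(lra) ltac:(rewrite Rabs_right; lra)).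
  assert (F x <= F (x + d / 2)) by (apply Hm; lra).
  assert (0 <= (F (x + d / 2) - F x) / (d / 2)).
  { unfold Rdiv; apply Rmult_le_pos; [lra| apply Rlt_le, Rinv_0_lt_compat; lra]. }
  apply Rabs_def2 in Hq. lra.
Qed.

Lemma le_of_forall_eps x b : (forall e, 0 < e -> x <= b + e) -> x <= b.
Proof.
  intros H. destruct (Rle_or_lt x b) as [|Hl]; [assumption|].
  specialize (H ((x - b) / 2)). lra.
Qed.

Lemma abs_le_between x u : Rabs x <= u -> - u <= x <= u.
Proof. intros H. pose proof (Rle_abs x). pose proof (Rle_abs (- x)). rewrite Rabs_Ropp in *. lra. Qed.

Lemma mul_close x y X Y e : e <= 1 -> Rabs (x - X) < e -> Rabs (y - Y) < e ->
  Rabs (x * y - X * Y) <= e * (Rabs X + Rabs Y + 1).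
Proof.
  intros He Hx Hy.
  assert (Hy' : Rabs y <= Rabs Y + 1).
  { replace y with ((y - Y) + Y) by ring. eapply Rle_trans; [apply Rabs_triang|]. lra. }
  replace (x * y - X * Y) with ((x - X) * y + X * (y - Y)) by ring.
  eapply Rle_trans; [apply Rabs_triang|]. rewrite !Rabs_mult.
  assert (Rabs (x - X) * Rabs y <= e * (Rabs Y + 1)) by (apply Rmult_le_compat; try apply Rabs_pos; lra).
  assert (Rabs X * Rabs (y - Y) <= Rabs X * e) by (apply Rmult_le_compat_l; [apply Rabs_pos|lra]).
  lra.
Qed.

Lemma finite_min {A} (l : list A) (Q : A -> R -> Prop) :
  (forall x e e', Q x e -> 0 < e' <= e -> Q x e') ->
  (forall x, In x l -> exists e, 0 < e /\ Q x e) ->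
  exists e, 0 < e /\ forall x, In x l -> Q x e.
Proof.
  intros Hm. induction l as [|y l IH]; intros Hl.
  - exists 1. split; [lra| intros x []].
  - destruct (Hl y (or_introl eq_refl)) as [e1 [He1 Q1]].
    destruct IH as [e2 [He2 Q2]]; [intros x Hx; apply Hl; right; exact Hx|].
    exists (Rmin e1 e2). split; [apply Rmin_glb_lt; lra|].
    pose proof (Rmin_l e1 e2). pose proof (Rmin_r e1 e2).
    intros x [<-|Hx]; [apply (Hm _ e1)| apply (Hm _ e2); [apply Q2|]]; auto; split; try lra; apply Rmin_glb_lt; lra.
Qed.

Lemma radius_if (C : Prop) (P : R -> Prop) :
  (C -> exists d, 0 < d /\ P d) -> exists d, 0 < d /\ (C -> P d).
Proof.
  intros H. destruct (classic C) as [c|nc].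
  - destruct (H c) as [d [Hd Pd]]. exists d. auto.
  - exists 1. split; [lra| intros c; contradiction].
Qed.

Lemma real_induction (a b : R) (Good : R -> Prop) : a < b ->
  (forall s, a <= s < b -> (s = a \/ Good s) -> exists d, 0 < d /\ forall x, s < x < s + d -> x <= b -> Good x) ->
  (forall s, a < s <= b -> (forall x, a < x < s -> Good x) -> Good s) -> Good b.
Proof.
  intros Hab Hright Hleft.
  set (A := fun s => a <= s <= b /\ forall x, a < x <= s -> Good x).
  assert (HA : A a) by (split; [lra| intros; lra]).
  assert (Hb : bound A) by (exists b; intros s [Hs _]; lra).
  destruct (completeness A Hb (ex_intro _ a HA)) as [m [Hub Hlub]].
  assert (Hmb : m <= b) by (apply Hlub; intros s [Hs _]; lra).
  assert (Hstep : forall s, A s -> s < b -> (s = a \/ Good s) -> exists s', s < s' /\ A s').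
  { intros s [Hs HgA] Hsb Hor. destruct (Hright s ltac:(lra) Hor) as [d [Hd Hg]].
    set (k := Rmin d (b - s) / 2).
    assert (0 < Rmin d (b - s)) by (apply Rmin_glb_lt; lra).
    pose proof (Rmin_l d (b - s)). pose proof (Rmin_r d (b - s)).
    exists (s + k). unfold k. split; [lra|]. split; [lra|].
    intros x Hx. destruct (Rle_or_lt x s) as [Hxs|Hxs]; [apply HgA; lra|].
    destruct Hor as [->|Gs]; [apply Hg; lra|].
    destruct (Req_dec x s) as [->|Hxs2]; [exact Gs| apply Hg; lra]. }
  assert (Hlt : a < m).
  { destruct (Hstep a HA Hab (or_introl eq_refl)) as [s' [Hs' As']]. apply Hub in As'. lra. }
  assert (Hbelow : forall x, a < x < m -> Good x).
  { intros x Hx. apply NNPP. intros Hn.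
    assert (Hx' : is_upper_bound A x).
    { intros s [Hs Hg]. destruct (Rle_or_lt s x) as [|Hl]; [assumption|]. exfalso. apply Hn, Hg. lra. }
    apply Hlub in Hx'. lra. }
  assert (Hm : Good m) by (apply Hleft; [lra| exact Hbelow]).
  destruct (Rle_lt_or_eq_dec m b Hmb) as [Hl| ->]; [exfalso|exact Hm].
  assert (Am : A m).
  { split; [lra|]. intros x Hx. destruct (Req_dec x m) as [->|Hxm]; [exact Hm| apply Hbelow; lra]. }
  destruct (Hstep m Am Hl (or_intror Hm)) as [s' [Hs' As']]. apply Hub in As'. lra.
Qed.

(* ** Geometry of planar polytopes *)

Definition bounded (H : halfspaces) :=
  exists M, forall y, in_poly H y -> Rabs (fst y) <= M /\ Rabs (snd y) <= M.

Definition slice_top H s t := in_poly H (s,t) /\ forall t', in_poly H (s,t') -> t' <= t.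
Definition slice_bot H s t := in_poly H (s,t) /\ forall t', in_poly H (s,t') -> t <= t'.

Lemma slice_top_unique H s t1 t2 : slice_top H s t1 -> slice_top H s t2 -> t1 = t2.
Proof. intros [A1 B1] [A2 B2]. apply B1 in A2. apply B2 in A1. lra. Qed.
Lemma slice_bot_unique H s t1 t2 : slice_bot H s t1 -> slice_bot H s t2 -> t1 = t2.
Proof. intros [A1 B1] [A2 B2]. apply B1 in A2. apply B2 in A1. lra. Qed.

Definition segp (Y1 Y2 : R2) l : R2 :=
  (fst Y1 + l * (fst Y2 - fst Y1), snd Y1 + l * (snd Y2 - snd Y1)).

Lemma poly_convex H u v l : in_poly H u -> in_poly H v -> 0 <= l <= 1 -> in_poly H (segp u v l).
Proof.
  intros Hu Hv Hl h Hh.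
  replace (dot (fst h) (segp u v l)) with (dot (fst h) u + l * (dot (fst h) v - dot (fst h) u))
    by (unfold dot, segp; simpl; ring).
  specialize (Hu h Hh). specialize (Hv h Hh).
  assert (l * (dot (fst h) v - dot (fst h) u) <= l * (snd h - dot (fst h) u)) by (apply Rmult_le_compat_l; lra).
  nra.
Qed.

Lemma segment_reaches (pr : R2 -> R) Y1 Y2 x :
  (forall l, pr (segp Y1 Y2 l) = pr Y1 + l * (pr Y2 - pr Y1)) ->
  Rmin (pr Y1) (pr Y2) <= x <= Rmax (pr Y1) (pr Y2) ->
  exists l, 0 <= l <= 1 /\ pr (segp Y1 Y2 l) = x.
Proof.
  intros Hpr Hx. destruct (Req_dec (pr Y1) (pr Y2)) as [E|N].
  - exists 0. split; [lra|]. rewrite Hpr, E, Rmin_left, Rmax_left in *; lra.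
  - exists ((x - pr Y1) / (pr Y2 - pr Y1)). rewrite Hpr. split; [|field; lra].
    destruct (Rlt_or_le (pr Y1) (pr Y2)) as [Lt|Ge].
    + rewrite Rmin_left, Rmax_right in Hx by lra. split.
      * apply Rmult_le_pos; [lra| apply Rlt_le, Rinv_0_lt_compat; lra].
      * apply (Rmult_le_reg_r (pr Y2 - pr Y1)); [lra|]. field_simplify; lra.
    + rewrite Rmin_right, Rmax_left in Hx by lra.
      replace ((x - pr Y1) / (pr Y2 - pr Y1)) with ((pr Y1 - x) / (pr Y1 - pr Y2)) by (field; lra). split.
      * apply Rmult_le_pos; [lra| apply Rlt_le, Rinv_0_lt_compat; lra].
      * apply (Rmult_le_reg_r (pr Y1 - pr Y2)); [lra|]. field_simplify; lra.
Qed.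

Lemma dist2_lt u v d : dist2 u v < d <-> Rabs (fst u - fst v) < d /\ Rabs (snd u - snd v) < d.
Proof.
  unfold dist2, vnorm, vsub; simpl. split.
  - intros Hd. split; eapply Rle_lt_trans; [apply Rmax_l| exact Hd| apply Rmax_r| exact Hd].
  - intros [A B]. apply Rmax_lub_lt; assumption.
Qed.

Lemma dist2_self u d : 0 < d -> dist2 u u < d.
Proof. intros. apply dist2_lt. rewrite !Rminus_diag, Rabs_R0. auto. Qed.

Lemma segp_close Y1 Y2 X d l : dist2 Y1 X < d -> dist2 Y2 X < d -> 0 <= l <= 1 ->
  dist2 (segp Y1 Y2 l) X < d.
Proof.
  intros D1 D2 Hl. apply dist2_lt in D1, D2. apply dist2_lt. unfold segp; simpl.
  assert (Hconv : forall x y, Rabs x < d -> Rabs y < d -> Rabs ((1 - l) * x + l * y) < d).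
  { intros x y Hx Hy. apply Rabs_def2 in Hx, Hy.
    assert (0 <= l * (d - y) /\ 0 <= l * (y + d)) by (split; apply Rmult_le_pos; lra).
    assert (0 <= (1 - l) * (d - x) /\ 0 <= (1 - l) * (x + d)) by (split; apply Rmult_le_pos; lra).
    apply Rabs_def1; nra. }
  split; [replace (fst Y1 + l * (fst Y2 - fst Y1) - fst X) with ((1 - l) * (fst Y1 - fst X) + l * (fst Y2 - fst X)) by ring
         |replace (snd Y1 + l * (snd Y2 - snd Y1) - snd X) with ((1 - l) * (snd Y1 - snd X) + l * (snd Y2 - snd X)) by ring];
  apply Hconv; tauto.
Qed.

Lemma slice_convex H s t1 t2 t : in_poly H (s,t1) -> in_poly H (s,t2) -> t1 <= t <= t2 -> in_poly H (s,t).
Proof.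
  intros H1 H2 Ht.
  destruct (segment_reaches snd (s,t1) (s,t2) t) as [l [Hl E]]; [intros; reflexivity| simpl; rewrite Rmin_left, Rmax_right by lra; lra|].
  replace (s,t) with (segp (s,t1) (s,t2) l) by (unfold segp in *; simpl in *; f_equal; lra).
  apply poly_convex; assumption.
Qed.

(* A nonempty slice of a bounded polytope has a top point (the supremum of
   the slice belongs to it, the constraints being closed). *)
Lemma slice_top_exists H s t0 : bounded H -> in_poly H (s,t0) -> exists t, slice_top H s t.
Proof.
  intros [M HM] H0.
  set (E := fun t => in_poly H (s,t)).
  assert (Hb : bound E).
  { exists M. intros t Ht. destruct (HM _ Ht) as [_ K]. simpl in K. pose proof (Rle_abs t). lra. }
  destruct (completeness E Hb (ex_intro _ t0 H0)) as [m [Hub Hlub]].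
  exists m. split; [|intros t' Ht'; apply Hub; exact Ht'].
  intros [a b] Hh. simpl. apply le_of_forall_eps. intros e He.
  set (e' := e / (Rabs (snd a) + 1)).
  pose proof (Rabs_pos (snd a)).
  assert (He' : 0 < e') by (unfold e'; apply Rdiv_lt_0_compat; lra).
  assert (Hnear : exists t, E t /\ m - e' < t).
  { apply NNPP. intros Hn.
    assert (Hup : is_upper_bound E (m - e')).
    { intros t Ht. apply Rnot_lt_le. intros Hl. apply Hn. exists t. auto. }
    specialize (Hlub _ Hup). lra. }
  destruct Hnear as [t [Et Ht]].
  specialize (Hub t Et). specialize (Et (a,b) Hh). unfold dot in *; simpl in *.
  assert (snd a * (m - t) <= Rabs (snd a) * e').
  { eapply Rle_trans; [apply Rle_abs|]. rewrite Rabs_mult, (Rabs_right (m - t)) by lra.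
    apply Rmult_le_compat_l; lra. }
  assert (Rabs (snd a) * e' <= e).
  { unfold e'. apply Rle_trans with ((Rabs (snd a) + 1) * (e / (Rabs (snd a) + 1))).
    - apply Rmult_le_compat_r; [fold e'|]; lra.
    - right; field; lra. }
  nra.
Qed.

(* At the top of a slice some constraint with positive t-coefficient is tight
   (otherwise the point could be moved up). *)
Lemma slice_top_tight H s t : slice_top H s t -> exists a b, In (a,b) H /\ 0 < snd a /\ dot a (s,t) = b.
Proof.
  intros [Hin Hmax]. apply NNPP. intros Hn.
  destruct (finite_min H (fun h e => 0 < snd (fst h) -> snd (fst h) * e <= snd h - dot (fst h) (s,t))) as [e [He Hq]].
  { intros x e e' Hq He' Ha. specialize (Hq Ha). nra. }
  { intros [a b] Hh. simpl. destruct (Rlt_or_le 0 (snd a)) as [Ha|Ha].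
    - assert (dot a (s,t) < b).
      { destruct (Rle_lt_or_eq_dec _ _ (Hin (a,b) Hh)) as [|E]; [assumption|].
        exfalso. apply Hn. exists a, b. auto. }
      exists ((b - dot a (s,t)) / snd a). split; [apply Rdiv_lt_0_compat; lra|].
      intros _. right. field. lra.
    - exists 1. split; [lra|]. intros; lra. }
  assert (Hup : in_poly H (s, t + e)).
  { intros [a b] Hh. specialize (Hq _ Hh). specialize (Hin _ Hh). unfold dot in *; simpl in *.
    destruct (Rlt_or_le 0 (snd a)) as [Ha|Ha]; [specialize (Hq Ha); lra| nra]. }
  specialize (Hmax _ Hup). lra.
Qed.

(* The line dot a y = b, for snd a <> 0, as the graph of an affine function. *)
Definition lin (a : R2) (b s : R) := (b - fst a * s) / snd a.
(* the rate of decrease of lin a b *)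
Definition slope (a : R2) := fst a / snd a.

Lemma lin_on a b s : snd a <> 0 -> dot a (s, lin a b s) = b.
Proof. intros. unfold dot, lin; simpl. field. auto. Qed.

Lemma on_lin a b s t : snd a <> 0 -> dot a (s,t) = b -> t = lin a b s.
Proof. intros Ha E. unfold dot, lin in *; simpl in *. rewrite <- E. field. auto. Qed.

Lemma lin_affine a b s1 s2 : snd a <> 0 -> lin a b s2 = lin a b s1 - slope a * (s2 - s1).
Proof. intros. unfold lin, slope. field. auto. Qed.

Lemma lin_cont a b s : forall e, 0 < e -> exists d, 0 < d /\ forall x, Rabs (x - s) < d -> Rabs (lin a b x - lin a b s) < e.
Proof.
  intros e He. set (k := Rabs (fst a / snd a)). pose proof (Rabs_pos (fst a / snd a)).
  exists (e / (k + 1)). split; [apply Rdiv_lt_0_compat; unfold k; lra|]. intros x Hx.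
  replace (lin a b x - lin a b s) with (- (fst a / snd a) * (x - s)) by (unfold lin, Rdiv; ring).
  rewrite Rabs_mult, Rabs_Ropp. fold k.
  apply Rle_lt_trans with ((k + 1) * Rabs (x - s)); [pose proof (Rabs_pos (x - s)); unfold k in *; nra|].
  apply Rlt_le_trans with ((k + 1) * (e / (k + 1))); [apply Rmult_lt_compat_l; unfold k in *; lra|].
  right; field; unfold k; lra.
Qed.

Lemma slice_top_lin H a b s : In (a,b) H -> 0 < snd a -> in_poly H (s, lin a b s) -> slice_top H s (lin a b s).
Proof.
  intros Hh Ha Hin. split; [exact Hin|]. intros t' Ht'. specialize (Ht' _ Hh).
  unfold dot, lin in *; simpl in *. apply (Rmult_le_reg_l (snd a)); [lra|]. field_simplify; lra.
Qed.

Lemma lin_in_between H a b s1 s2 s : snd a <> 0 ->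
  in_poly H (s1, lin a b s1) -> in_poly H (s2, lin a b s2) -> s1 <= s <= s2 -> in_poly H (s, lin a b s).
Proof.
  intros Ha H1 H2 Hs.
  destruct (segment_reaches fst (s1, lin a b s1) (s2, lin a b s2) s) as [l [Hl E]];
    [intros; reflexivity| simpl; rewrite Rmin_left, Rmax_right by lra; lra|].
  replace (s, lin a b s) with (segp (s1, lin a b s1) (s2, lin a b s2) l); [apply poly_convex; assumption|].
  unfold segp in *; simpl in *. subst s. f_equal.
  rewrite (lin_affine a b s1 s2), (lin_affine a b s1 (s1 + l * (s2 - s1))) by exact Ha. ring.
Qed.

Lemma affine_limit (f : R -> R) k s0 d b : 0 < d -> (forall s, f s = f s0 + k * (s - s0)) ->
  (forall s, s0 < s <= s0 + d -> f s <= b) -> f s0 <= b.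
Proof.
  intros Hd Hf Hb. apply le_of_forall_eps. intros e He.
  pose proof (Rabs_pos k).
  set (h := Rmin d (e / (Rabs k + 1))).
  assert (Hh : 0 < h) by (apply Rmin_glb_lt; [lra| apply Rdiv_lt_0_compat; lra]).
  assert (Hhd : h <= d) by apply Rmin_l.
  assert (Hhe : Rabs k * h <= e).
  { apply Rle_trans with ((Rabs k + 1) * (e / (Rabs k + 1))); [|right; field; lra].
    apply Rmult_le_compat; [lra| lra| lra| apply Rmin_r]. }
  specialize (Hb (s0 + h) ltac:(lra)). rewrite Hf in Hb.
  pose proof (Rle_abs (- k)). rewrite Rabs_Ropp in *. nra.
Qed.

(* Near the right of s0, the tops of the slices lie, for arbitrarily close
   abscissae, on one upper constraint line (there are finitely many). *)
Lemma top_line_near_right H s0 d0 : bounded H -> 0 < d0 ->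
  (forall s, s0 <= s <= s0 + d0 -> exists t, in_poly H (s,t)) ->
  exists a b, In (a,b) H /\ 0 < snd a /\ forall d', 0 < d' ->
    exists s, s0 < s < s0 + d' /\ s <= s0 + d0 /\ in_poly H (s, lin a b s).
Proof.
  intros Hbd Hd0 Hne. apply NNPP. intros Hn.
  set (Far := fun (h : R2 * R) e => 0 < snd (fst h) -> forall s, s0 < s <= s0 + d0 ->
                in_poly H (s, lin (fst h) (snd h) s) -> s0 + e <= s).
  destruct (finite_min H Far) as [e [He Hq]].
  { intros x e e' Hq He' Ha s Hs Hin. specialize (Hq Ha s Hs Hin). lra. }
  { intros [a b] Hh. simpl. destruct (Rlt_or_le 0 (snd a)) as [Ha|Ha].
    - apply NNPP. intros Hn2. apply Hn. exists a, b. split; [exact Hh|]. split; [exact Ha|].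
      intros d' Hd'. apply NNPP. intros Hn3. apply Hn2. exists d'. split; [exact Hd'|].
      intros _ s Hs Hin. apply Rnot_lt_le. intros Hl. apply Hn3. exists s. repeat split; lra || auto.
    - exists 1. split; [lra|]. unfold Far; simpl; intros; lra. }
  set (s := s0 + Rmin e d0 / 2).
  assert (0 < Rmin e d0) by (apply Rmin_glb_lt; lra).
  pose proof (Rmin_l e d0). pose proof (Rmin_r e d0).
  destruct (Hne s ltac:(unfold s; lra)) as [t0 Ht0].
  destruct (slice_top_exists H s t0 Hbd Ht0) as [t Ht].
  destruct (slice_top_tight H s t Ht) as [a [b [Hh [Ha Hdot]]]].
  assert (E : t = lin a b s) by (apply on_lin; lra).
  specialize (Hq _ Hh Ha s ltac:(unfold s; lra)). simpl in Hq.
  rewrite <- E in Hq. specialize (Hq (proj1 Ht)). unfold s in Hq. lra.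
Qed.

Lemma upper_right_edge H s0 d0 : bounded H -> 0 < d0 ->
  (forall s, s0 <= s <= s0 + d0 -> exists t, in_poly H (s,t)) ->
  exists d a b, 0 < d /\ d <= d0 /\ In (a,b) H /\ 0 < snd a /\
    forall s, s0 <= s <= s0 + d -> slice_top H s (lin a b s).
Proof.
  intros Hbd Hd0 Hne.
  destruct (top_line_near_right H s0 d0 Hbd Hd0 Hne) as [a [b [Hh [Ha Hcl]]]].
  destruct (Hcl d0 Hd0) as [s1 [Hs1 [_ Hin1]]].
  assert (Hint : forall s, s0 < s <= s1 -> in_poly H (s, lin a b s)).
  { intros s Hs. destruct (Hcl (s - s0) ltac:(lra)) as [s' [Hs' [_ Hin']]].
    apply (lin_in_between H a b s' s1 s ltac:(lra) Hin' Hin1). lra. }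
  exists (s1 - s0), a, b. split; [lra|]. split; [lra|]. split; [exact Hh|]. split; [exact Ha|].
  intros s Hs. apply slice_top_lin; try assumption.
  destruct (Rle_lt_or_eq_dec s0 s (proj1 Hs)) as [Hlt| <-]; [apply Hint; lra|].
  intros [a' b'] Hh'. simpl.
  apply (affine_limit (fun s => dot a' (s, lin a b s)) (fst a' - snd a' * slope a) s0 (s1 - s0)); [lra| |].
  - intros s. unfold dot, lin, slope; simpl. field. lra.
  - intros s Hs'. apply (Hint s ltac:(lra) (a',b') Hh').
Qed.

(* The other three edges (bottom/right, top/left, bottom/left) follow by the
   reflections t -> -t and s -> -s, which act on half-planes. *)
Lemma in_poly_map (f : R2 * R -> R2 * R) (g : R2 -> R2) H u :
  (forall h v, dot (fst (f h)) v = dot (fst h) (g v) /\ snd (f h) = snd h) ->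
  (in_poly (map f H) u <-> in_poly H (g u)).
Proof.
  intros Hf. split.
  - intros Hp h Hh. destruct (Hf h u) as [E1 E2]. rewrite <- E1, <- E2. apply Hp, in_map, Hh.
  - intros Hp h Hh. apply in_map_iff in Hh. destruct Hh as [h' [<- Hh']].
    destruct (Hf h' u) as [E1 E2]. rewrite E1, E2. apply Hp, Hh'.
Qed.

Definition reflT (h : R2 * R) : R2 * R := ((fst (fst h), - snd (fst h)), snd h).
Definition reflS (h : R2 * R) : R2 * R := ((- fst (fst h), snd (fst h)), snd h).

Lemma in_reflT H s t : in_poly (map reflT H) (s,t) <-> in_poly H (s, -t).
Proof. apply (in_poly_map reflT (fun v => (fst v, - snd v))). intros h v. unfold dot, reflT; simpl. split; [ring|reflexivity]. Qed.
Lemma in_reflS H s t : in_poly (map reflS H) (s,t) <-> in_poly H (-s, t).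
Proof. apply (in_poly_map reflS (fun v => (- fst v, snd v))). intros h v. unfold dot, reflS; simpl. split; [ring|reflexivity]. Qed.

Lemma bounded_reflT H : bounded H -> bounded (map reflT H).
Proof. intros [M HM]. exists M. intros [s t] Hy. apply in_reflT in Hy. destruct (HM _ Hy) as [A B]. simpl in *. rewrite Rabs_Ropp in B. auto. Qed.
Lemma bounded_reflS H : bounded H -> bounded (map reflS H).
Proof. intros [M HM]. exists M. intros [s t] Hy. apply in_reflS in Hy. destruct (HM _ Hy) as [A B]. simpl in *. rewrite Rabs_Ropp in A. auto. Qed.

Lemma top_reflT H s t : slice_top (map reflT H) s t <-> slice_bot H s (- t).
Proof.
  unfold slice_top, slice_bot. rewrite in_reflT. split; intros [A B]; split; auto.
  - intros t' Ht'. assert (Ht'' : in_poly (map reflT H) (s, - t')) by (apply in_reflT; rewrite Ropp_involutive; exact Ht').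
    specialize (B _ Ht''). lra.
  - intros t' Ht'. apply in_reflT in Ht'. specialize (B _ Ht'). lra.
Qed.
Lemma top_reflS H s t : slice_top (map reflS H) s t <-> slice_top H (- s) t.
Proof.
  unfold slice_top. rewrite in_reflS. split; intros [A B]; split; auto; intros t' Ht'; apply B.
  - apply in_reflS. exact Ht'.
  - apply in_reflS in Ht'. exact Ht'.
Qed.

Lemma in_map_reflT H a b : In (a,b) (map reflT H) -> In ((fst a, - snd a), b) H.
Proof.
  intros Hi. apply in_map_iff in Hi. destruct Hi as [[[x y] c] [E Hi]]. unfold reflT in E; simpl in E.
  inversion E. subst. simpl. rewrite Ropp_involutive. exact Hi.
Qed.
Lemma in_map_reflS H a b : In (a,b) (map reflS H) -> In ((- fst a, snd a), b) H.
Proof.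
  intros Hi. apply in_map_iff in Hi. destruct Hi as [[[x y] c] [E Hi]]. unfold reflS in E; simpl in E.
  inversion E. subst. simpl. rewrite Ropp_involutive. exact Hi.
Qed.

Lemma slice_bot_exists H s t0 : bounded H -> in_poly H (s,t0) -> exists t, slice_bot H s t.
Proof.
  intros Hb Ht. destruct (slice_top_exists (map reflT H) s (- t0) (bounded_reflT H Hb)) as [t Ht'].
  { apply in_reflT. rewrite Ropp_involutive. exact Ht. }
  exists (- t). apply top_reflT. exact Ht'.
Qed.

Lemma lower_right_edge H s0 d0 : bounded H -> 0 < d0 ->
  (forall s, s0 <= s <= s0 + d0 -> exists t, in_poly H (s,t)) ->
  exists d a b, 0 < d /\ d <= d0 /\ In (a,b) H /\ snd a < 0 /\
    forall s, s0 <= s <= s0 + d -> slice_bot H s (lin a b s).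
Proof.
  intros Hb Hd Hne.
  destruct (upper_right_edge (map reflT H) s0 d0 (bounded_reflT H Hb) Hd) as [d [a [b [Hd1 [Hd2 [Hh [Ha Hs]]]]]]].
  { intros s Hs. destruct (Hne s Hs) as [t Ht]. exists (- t). apply in_reflT. rewrite Ropp_involutive. exact Ht. }
  exists d, (fst a, - snd a), b. split; [lra|]. split; [lra|]. split; [apply in_map_reflT, Hh|]. split; [simpl; lra|].
  intros s Hsr. specialize (Hs s Hsr). apply top_reflT in Hs.
  replace (lin (fst a, - snd a) b s) with (- lin a b s); [exact Hs|]. unfold lin; simpl. field. lra.
Qed.

Lemma upper_left_edge H s0 d0 : bounded H -> 0 < d0 ->
  (forall s, s0 - d0 <= s <= s0 -> exists t, in_poly H (s,t)) ->
  exists d a b, 0 < d /\ d <= d0 /\ In (a,b) H /\ 0 < snd a /\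
    forall s, s0 - d <= s <= s0 -> slice_top H s (lin a b s).
Proof.
  intros Hb Hd Hne.
  destruct (upper_right_edge (map reflS H) (- s0) d0 (bounded_reflS H Hb) Hd) as [d [a [b [Hd1 [Hd2 [Hh [Ha Hs]]]]]]].
  { intros s Hs. destruct (Hne (- s) ltac:(lra)) as [t Ht]. exists t. apply in_reflS. exact Ht. }
  exists d, (- fst a, snd a), b. split; [lra|]. split; [lra|]. split; [apply in_map_reflS, Hh|]. split; [simpl; lra|].
  intros s Hsr. specialize (Hs (- s) ltac:(lra)). apply (proj1 (top_reflS H _ _)) in Hs. rewrite Ropp_involutive in Hs.
  replace (lin (- fst a, snd a) b s) with (lin a b (- s)); [exact Hs|]. unfold lin; simpl. field. lra.
Qed.

Lemma lower_left_edge H s0 d0 : bounded H -> 0 < d0 ->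
  (forall s, s0 - d0 <= s <= s0 -> exists t, in_poly H (s,t)) ->
  exists d a b, 0 < d /\ d <= d0 /\ In (a,b) H /\ snd a < 0 /\
    forall s, s0 - d <= s <= s0 -> slice_bot H s (lin a b s).
Proof.
  intros Hb Hd Hne.
  destruct (upper_left_edge (map reflT H) s0 d0 (bounded_reflT H Hb) Hd) as [d [a [b [Hd1 [Hd2 [Hh [Ha Hs]]]]]]].
  { intros s Hs. destruct (Hne s Hs) as [t Ht]. exists (- t). apply in_reflT. rewrite Ropp_involutive. exact Ht. }
  exists d, (fst a, - snd a), b. split; [lra|]. split; [lra|]. split; [apply in_map_reflT, Hh|]. split; [simpl; lra|].
  intros s Hsr. specialize (Hs s Hsr). apply top_reflT in Hs.
  replace (lin (fst a, - snd a) b s) with (- lin a b s); [exact Hs|]. unfold lin; simpl. field. lra.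
Qed.

(* ** Separable maps on a polygon *)

(* G(s,t) = (g0 s + h0 t, g1 s + h1 t) together with the derivatives
   a0 = g0', a1 = g1', b0 = h0', b1 = h1' of its scalar components. *)
Record SepMap := mkSep { g0 : R -> R; g1 : R -> R; h0 : R -> R; h1 : R -> R;
                         a0 : R -> R; a1 : R -> R; b0 : R -> R; b1 : R -> R }.

Section SepMapDefs.
Variable D : SepMap.

(* entries of the Jacobian ((mA0, mB0), (mA1, mB1)) of G at u *)
Definition mA0 (u : R2) := a0 D (fst u).
Definition mA1 (u : R2) := a1 D (fst u).
Definition mB0 (u : R2) := b0 D (snd u).
Definition mB1 (u : R2) := b1 D (snd u).
Definition det_sep u := mA0 u * mB1 u - mB0 u * mA1 u.
(* the quadratic form v . (dG(u) v) in the direction v = (1, -r) *)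
Definition quad u r := mA0 u - r * mA1 u - r * mB0 u + r * r * mB1 u.
Definition G0 (u : R2) := g0 D (fst u) + h0 D (snd u).
Definition G1 (u : R2) := g1 D (fst u) + h1 D (snd u).
(* Lagrangian of "G0 subject to G1 = c'" with multiplier r *)
Definition lagr c' r u := G0 u - r * (G1 u - c').

End SepMapDefs.

Record SepHyp (D : SepMap) (H : halfspaces) : Prop := {
  sh_dg0 : forall s, derivable_pt_lim (g0 D) s (a0 D s);
  sh_dg1 : forall s, derivable_pt_lim (g1 D) s (a1 D s);
  sh_dh0 : forall s, derivable_pt_lim (h0 D) s (b0 D s);
  sh_dh1 : forall s, derivable_pt_lim (h1 D) s (b1 D s);
  sh_mg0 : forall x y, x <= y -> g0 D x <= g0 D y;
  sh_mg1 : forall x y, x <= y -> g1 D x <= g1 D y;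
  sh_mh0 : forall x y, x <= y -> h0 D x <= h0 D y;
  sh_mh1 : forall x y, x <= y -> h1 D x <= h1 D y;
  sh_bnd : bounded H;
  sh_pos : forall u, in_poly H u -> 0 < mA0 D u /\ 0 < mB1 D u /\ 0 < det_sep D u;
  sh_cont : forall u, in_poly H u -> forall e, 0 < e -> exists d, 0 < d /\ forall v, in_poly H v -> dist2 v u < d ->
     Rabs (mA0 D v - mA0 D u) < e /\ Rabs (mA1 D v - mA1 D u) < e /\
     Rabs (mB0 D v - mB0 D u) < e /\ Rabs (mB1 D v - mB1 D u) < e;
  sh_edge : forall a b, In (a,b) H -> snd a <> 0 -> forall u1 u2, in_poly H u1 -> in_poly H u2 ->
     dot a u1 = b -> dot a u2 = b -> u1 <> u2 -> forall u, in_poly H u -> dot a u = b -> 0 < quad D u (slope a)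
}.

Lemma step_sign_alg a0 a1 b0 b1 r ds dt :
  0 < b1 -> 0 < a0*b1 - b0*a1 -> 0 < a0 - r*a1 - r*b0 + r*r*b1 -> 0 < ds ->
  (dt + r*ds) * (a1*ds + b1*dt) <= 0 -> 0 < (a0 - r*a1)*ds + (b0 - r*b1)*dt.
Proof.
  intros Hb1 Hdet Hq Hds Hc.
  set (k := b0 - r*b1). set (X := a1*ds + b1*dt). set (Y := dt + r*ds).
  assert (E1 : (a0 - r*a1)*ds + k*dt = (a0 - r*a1 - r*b0 + r*r*b1)*ds + k*Y) by (unfold k, Y; ring).
  assert (E2 : b1*((a0 - r*a1)*ds + k*dt) = (a0*b1 - b0*a1)*ds + k*X) by (unfold k, X; ring).
  fold k. destruct (Rle_or_lt 0 (k*Y)) as [HkY|HkY].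
  - rewrite E1. assert (0 < (a0 - r*a1 - r*b0 + r*r*b1)*ds) by (apply Rmult_lt_0_compat; lra). lra.
  - assert (HkX : 0 <= k*X).
    { assert ((k*X)*(k*Y) <= 0).
      { replace ((k*X)*(k*Y)) with ((k*k)*(Y*X)) by ring.
        assert (0 <= k*k) by nra. fold X Y in Hc. nra. }
      nra. }
    assert (0 < b1*((a0 - r*a1)*ds + k*dt)).
    { rewrite E2. assert (0 < (a0*b1 - b0*a1)*ds) by (apply Rmult_lt_0_compat; lra). lra. }
    nra.
Qed.

Lemma step_sign_near A0 A1 B0 B1 r : 0 < B1 -> 0 < A0*B1 - B0*A1 -> 0 < A0 - r*A1 - r*B0 + r*r*B1 ->
  exists e, 0 < e /\ forall a0 a1 b0 b1 ds dt,
    Rabs (a0 - A0) < e -> Rabs (a1 - A1) < e -> Rabs (b0 - B0) < e -> Rabs (b1 - B1) < e ->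
    0 < ds -> (dt + r*ds)*(a1*ds + b1*dt) <= 0 -> 0 < (a0 - r*a1)*ds + (b0 - r*b1)*dt.
Proof.
  intros HB1 HD HQ.
  set (Q := A0 - r*A1 - r*B0 + r*r*B1) in *. set (Det := A0*B1 - B0*A1) in *.
  set (K := 1 + 2*Rabs r + r*r).
  set (K2 := Rabs A0 + Rabs A1 + Rabs B0 + Rabs B1 + 2).
  pose proof (Rabs_pos r). pose proof (Rabs_pos A0). pose proof (Rabs_pos A1).
  pose proof (Rabs_pos B0). pose proof (Rabs_pos B1).
  assert (HK : 1 <= K) by (unfold K; nra). assert (HK2 : 2 <= K2) by (unfold K2; lra).
  set (e := Rmin (Rmin 1 (B1/2)) (Rmin (Q/(2*K)) (Det/(2*K2)))).
  assert (He : 0 < e) by (repeat apply Rmin_glb_lt; apply Rdiv_lt_0_compat || idtac; lra).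
  assert (Ee1 : e <= 1 /\ e <= B1/2) by (unfold e; split; [apply Rle_trans with (Rmin 1 (B1/2)); apply Rmin_l + apply Rmin_r|
     apply Rle_trans with (Rmin 1 (B1/2)); [apply Rmin_l| apply Rmin_r]]).
  assert (Ee2 : e * (2*K) <= Q /\ e * (2*K2) <= Det).
  { assert (Hq : e <= Q/(2*K) /\ e <= Det/(2*K2)) by (unfold e; split;
      (apply Rle_trans with (Rmin (Q/(2*K)) (Det/(2*K2))); [apply Rmin_r| first [apply Rmin_l|apply Rmin_r]])).
    destruct Hq as [Hq1 Hq2].
    split; [apply (Rmult_le_compat_r (2*K)) in Hq1| apply (Rmult_le_compat_r (2*K2)) in Hq2]; try lra;
    [replace (Q / (2*K) * (2*K)) with Q in Hq1 by (field; lra)| replace (Det / (2*K2) * (2*K2)) with Det in Hq2 by (field; lra)];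
    assumption. }
  exists e. split; [exact He|].
  intros a0 a1 b0 b1 ds dt Ha0 Ha1 Hb0 Hb1 Hds Hc. clearbody e.
  apply step_sign_alg; try assumption.
  - apply Rabs_def2 in Hb1. lra.
  -
    pose proof (abs_le_between _ _ (mul_close a0 b1 A0 B1 e ltac:(lra) Ha0 Hb1)).
    pose proof (abs_le_between _ _ (mul_close b0 a1 B0 A1 e ltac:(lra) Hb0 Ha1)).
    assert (e * (Rabs A0 + Rabs B1 + 1) + e * (Rabs B0 + Rabs A1 + 1) = e * K2) by (unfold K2; ring).
    unfold Det in *. lra.
  -
    assert (T : Rabs ((a0 - A0) - r*(a1 - A1) - r*(b0 - B0) + r*r*(b1 - B1)) <= e * K).
    { assert (T1 : Rabs (r * (a1 - A1)) <= Rabs r * e)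
        by (rewrite Rabs_mult; apply Rmult_le_compat_l; lra).
      assert (T2 : Rabs (r * (b0 - B0)) <= Rabs r * e)
        by (rewrite Rabs_mult; apply Rmult_le_compat_l; lra).
      assert (T3 : Rabs (r * r * (b1 - B1)) <= r * r * e)
        by (rewrite Rabs_mult, (Rabs_right (r*r)) by nra; apply Rmult_le_compat_l; nra).
      apply abs_le_between in T1, T2, T3. apply Rabs_def2 in Ha0.
      apply Rabs_le. unfold K. lra. }
    apply abs_le_between in T. unfold Q in *. lra.
Qed.

Lemma segment_point H (pr : R2 -> R) x y z :
  (forall l, pr (segp x y l) = pr x + l * (pr y - pr x)) ->
  in_poly H x -> in_poly H y -> Rmin (pr x) (pr y) <= z <= Rmax (pr x) (pr y) ->
  exists u, in_poly H u /\ pr u = z.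
Proof.
  intros Hpr Hx Hy Hz. destruct (segment_reaches pr x y z Hpr Hz) as [l [Hl E]].
  exists (segp x y l). split; [apply poly_convex|]; assumption.
Qed.

Lemma segment_point_near H (pr : R2 -> R) Y1 Y2 X d x :
  (forall l, pr (segp Y1 Y2 l) = pr Y1 + l * (pr Y2 - pr Y1)) ->
  in_poly H Y1 -> in_poly H Y2 -> dist2 Y1 X < d -> dist2 Y2 X < d ->
  Rmin (pr Y1) (pr Y2) <= x <= Rmax (pr Y1) (pr Y2) ->
  exists u, in_poly H u /\ dist2 u X < d /\ pr u = x.
Proof.
  intros Hpr H1 H2 D1 D2 Hx. destruct (segment_reaches pr Y1 Y2 x Hpr Hx) as [l [Hl E]].
  exists (segp Y1 Y2 l). split; [apply poly_convex|split; [apply segp_close|]]; assumption.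
Qed.

(* "The Lagrangian with multiplier r increases from Y1 to Y2", for Y1 to the
   left of Y2 and a move whose direction is compatible with the level set of
   G1 through Y1. *)
Definition lagr_incr D c' r (Y1 Y2 : R2) : Prop :=
  fst Y1 < fst Y2 -> ((snd Y2 - snd Y1) + r * (fst Y2 - fst Y1)) * (G1 D Y2 - G1 D Y1) <= 0 ->
  lagr D c' r Y1 < lagr D c' r Y2.

(* Near a point X of H where the form in direction (1, -r) is positive, the
   Lagrangian with multiplier r increases (mean value theorem on each scalar
   component, then the robust algebraic inequality). *)
Lemma lagr_incr_near D H (HC : SepHyp D H) X r c' : in_poly H X -> 0 < quad D X r ->
  exists d, 0 < d /\ forall Y1 Y2, in_poly H Y1 -> in_poly H Y2 -> dist2 Y1 X < d -> dist2 Y2 X < d ->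
    lagr_incr D c' r Y1 Y2.
Proof.
  intros HX HQ. destruct (sh_pos D H HC X HX) as [Hp1 [Hp2 Hp3]].
  destruct (step_sign_near (mA0 D X) (mA1 D X) (mB0 D X) (mB1 D X) r Hp2 Hp3 HQ) as [e [He Halg]].
  destruct (sh_cont D H HC X HX e He) as [d [Hd Hc]].
  exists d. split; [exact Hd|]. intros Y1 Y2 H1 H2 D1 D2 Hlt Hcon.
  destruct (mvt_between (g0 D) (a0 D) (fst Y1) (fst Y2) (sh_dg0 D H HC)) as [x0 [Hx0 E0]].
  destruct (mvt_between (g1 D) (a1 D) (fst Y1) (fst Y2) (sh_dg1 D H HC)) as [x1 [Hx1 E1]].
  destruct (mvt_between (h0 D) (b0 D) (snd Y1) (snd Y2) (sh_dh0 D H HC)) as [y0 [Hy0 F0]].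
  destruct (mvt_between (h1 D) (b1 D) (snd Y1) (snd Y2) (sh_dh1 D H HC)) as [y1 [Hy1 F1]].
  assert (Hfst : forall l, fst (segp Y1 Y2 l) = fst Y1 + l * (fst Y2 - fst Y1)) by reflexivity.
  assert (Hsnd : forall l, snd (segp Y1 Y2 l) = snd Y1 + l * (snd Y2 - snd Y1)) by reflexivity.
  (* the four intermediate points are near X, so the entries there are e-close *)
  destruct (segment_point_near H fst Y1 Y2 X d x0 Hfst H1 H2 D1 D2 Hx0) as [u0 [Hu0 [Du0 Eu0]]].
  destruct (segment_point_near H fst Y1 Y2 X d x1 Hfst H1 H2 D1 D2 Hx1) as [u1 [Hu1 [Du1 Eu1]]].
  destruct (segment_point_near H snd Y1 Y2 X d y0 Hsnd H1 H2 D1 D2 Hy0) as [v0 [Hv0 [Dv0 Ev0]]].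
  destruct (segment_point_near H snd Y1 Y2 X d y1 Hsnd H1 H2 D1 D2 Hy1) as [v1 [Hv1 [Dv1 Ev1]]].
  destruct (Hc u0 Hu0 Du0) as [C0 _]. destruct (Hc u1 Hu1 Du1) as [_ [C1 _]].
  destruct (Hc v0 Hv0 Dv0) as [_ [_ [C2 _]]]. destruct (Hc v1 Hv1 Dv1) as [_ [_ [_ C3]]].
  unfold mA0, mA1, mB0, mB1 in C0, C1, C2, C3.
  rewrite Eu0 in C0. rewrite Eu1 in C1. rewrite Ev0 in C2. rewrite Ev1 in C3.
  assert (HG1 : G1 D Y2 - G1 D Y1 = a1 D x1 * (fst Y2 - fst Y1) + b1 D y1 * (snd Y2 - snd Y1))
    by (unfold G1; rewrite <- E1, <- F1; ring).
  assert (HG0 : G0 D Y2 - G0 D Y1 = a0 D x0 * (fst Y2 - fst Y1) + b0 D y0 * (snd Y2 - snd Y1))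
    by (unfold G0; rewrite <- E0, <- F0; ring).
  rewrite HG1 in Hcon.
  specialize (Halg _ _ _ _ (fst Y2 - fst Y1) (snd Y2 - snd Y1) C0 C1 C2 C3 ltac:(lra) Hcon).
  assert (Hdiff : lagr D c' r Y2 - lagr D c' r Y1 = (G0 D Y2 - G0 D Y1) - r * (G1 D Y2 - G1 D Y1))
    by (unfold lagr; ring).
  rewrite HG0, HG1 in Hdiff. lra.
Qed.

Lemma G1_mono_t D H (HC : SepHyp D H) s t1 t2 : t1 <= t2 -> G1 D (s,t1) <= G1 D (s,t2).
Proof. intros. unfold G1; simpl. pose proof (sh_mh1 D H HC t1 t2 H0). lra. Qed.

Lemma G1_strict_t D H (HC : SepHyp D H) s t1 t2 : in_poly H (s,t1) -> in_poly H (s,t2) -> t1 < t2 ->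
  G1 D (s,t1) < G1 D (s,t2).
Proof.
  intros H1 H2 Ht. destruct (mvt_between (h1 D) (b1 D) t1 t2 (sh_dh1 D H HC)) as [c [Hc E]].
  rewrite Rmin_left, Rmax_right in Hc by lra.
  assert (Hin : in_poly H (s,c)) by (apply (slice_convex H s t1 t2); auto).
  destruct (sh_pos D H HC (s,c) Hin) as [_ [Hb _]]. unfold mB1 in Hb; simpl in Hb.
  unfold G1; simpl. assert (0 < b1 D c * (t2 - t1)) by (apply Rmult_lt_0_compat; lra). lra.
Qed.

Definition Route D H c' s t := in_poly H (s,t) /\
  (G1 D (s,t) = c' \/ (G1 D (s,t) < c' /\ slice_top H s t) \/ (c' < G1 D (s,t) /\ slice_bot H s t)).

(* Route points are ordered: a lower one would have a smaller value of G1,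
   hence be the top of the slice. *)
Lemma route_le D H (HC : SepHyp D H) c' s t1 t2 : Route D H c' s t1 -> Route D H c' s t2 -> t1 <= t2.
Proof.
  intros [P1 R1] [P2 R2]. apply Rnot_lt_le. intros Hlt.
  pose proof (G1_strict_t D H HC s t2 t1 P2 P1 Hlt) as HG.
  destruct R1 as [E1|[[L1 _]|[_ [_ M1]]]]; [| |specialize (M1 t2 P2); lra];
    (destruct R2 as [E2|[[_ [_ M2]]|[L2 _]]]; [lra| specialize (M2 t1 P1); lra| lra]).
Qed.

Lemma route_unique D H (HC : SepHyp D H) c' s t1 t2 : Route D H c' s t1 -> Route D H c' s t2 -> t1 = t2.
Proof. intros R1 R2. pose proof (route_le D H HC c' s t1 t2 R1 R2). pose proof (route_le D H HC c' s t2 t1 R2 R1). lra. Qed.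

Lemma route_exists D H (HC : SepHyp D H) c' s t0 : in_poly H (s,t0) -> exists t, Route D H c' s t.
Proof.
  intros H0. destruct (slice_top_exists H s t0 (sh_bnd D H HC) H0) as [th Hh].
  destruct (slice_bot_exists H s t0 (sh_bnd D H HC) H0) as [tl Hl].
  destruct (Rlt_or_le (G1 D (s,th)) c') as [Lh|Lh].
  { exists th. split; [apply Hh|]. right; left; auto. }
  destruct (Rlt_or_le c' (G1 D (s,tl))) as [Ll|Ll].
  { exists tl. split; [apply Hl|]. right; right; auto. }
  assert (Hlh : tl <= th) by (destruct Hl as [A _]; apply Hh; exact A).
  assert (Hc : continuity (fun t => G1 D (s,t) - c')).
  { intros t. apply derivable_continuous_pt. exists (b1 D t). unfold G1; simpl.
    replace (b1 D t) with (0 + b1 D t - 0) by ring.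
    apply derivable_pt_lim_minus; [apply derivable_pt_lim_plus|]; [apply derivable_pt_lim_const| apply (sh_dh1 D H HC)| apply derivable_pt_lim_const]. }
  destruct (IVT_cor _ tl th Hc Hlh) as [t [Ht E]].
  { assert (0 <= G1 D (s,th) - c') by lra. assert (G1 D (s,tl) - c' <= 0) by lra. nra. }
  exists t. split; [apply (slice_convex H s tl th); [apply Hl|apply Hh|exact Ht]| left; lra].
Qed.

Definition tends_along D H c' (N : R -> Prop) s t (Phi : R -> R -> R) : Prop :=
  forall e, 0 < e -> exists d, 0 < d /\ forall x t', N x -> Rabs (x - s) < d -> Route D H c' x t' ->
    Rabs (Phi x t' - Phi s t) < e.

Lemma tends_of_cont D H c' N s t (l : R -> R) :
  (forall e, 0 < e -> exists d, 0 < d /\ forall x, Rabs (x - s) < d -> Rabs (l x - l s) < e) ->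
  tends_along D H c' N s t (fun x _ => l x).
Proof. intros Hl e He. destruct (Hl e He) as [d [Hd K]]. exists d. split; [exact Hd|]. intros; apply K; assumption. Qed.

Lemma tends_G1 D H (HC : SepHyp D H) c' N s t :
  tends_along D H c' N s t (fun _ t' => t') -> tends_along D H c' N s t (fun x t' => G1 D (x,t')).
Proof.
  intros Rc e He.
  destruct (derivable_cont_at (g1 D) s (a1 D s) (sh_dg1 D H HC s) (e/2) ltac:(lra)) as [d1 [Hd1 K1]].
  destruct (derivable_cont_at (h1 D) t (b1 D t) (sh_dh1 D H HC t) (e/2) ltac:(lra)) as [d2 [Hd2 K2]].
  destruct (Rc d2 Hd2) as [d3 [Hd3 K3]].
  exists (Rmin d1 d3). split; [apply Rmin_glb_lt; lra|].
  intros x t' Nx Hx Rt.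
  specialize (K1 x (Rlt_le_trans _ _ _ Hx (Rmin_l _ _))).
  specialize (K3 x t' Nx (Rlt_le_trans _ _ _ Hx (Rmin_r _ _)) Rt). specialize (K2 t' K3).
  unfold G1; simpl. apply Rabs_def2 in K1, K2. apply Rabs_def1; lra.
Qed.

Section RouteContinuity.
Variables (D : SepMap) (H : halfspaces) (c' : R) (N : R -> Prop) (s t : R) (l lam : R -> R).
Hypothesis HC : SepHyp D H.
Hypothesis Ns : N s.
Hypothesis Hedge : forall x, N x -> slice_top H x (l x) /\ slice_bot H x (lam x).
Hypothesis Hl : forall e, 0 < e -> exists d, 0 < d /\ forall x, Rabs (x - s) < d -> Rabs (l x - l s) < e.
Hypothesis Hlam : forall e, 0 < e -> exists d, 0 < d /\ forall x, Rabs (x - s) < d -> Rabs (lam x - lam s) < e.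
Hypothesis Rt : Route D H c' s t.

(* Either the top of the slice is below t + e near s, or G1 exceeds c' at
   height t + e/2 near s, which forces the route below that height. *)
Lemma route_upper_bound e : 0 < e ->
  exists d, 0 < d /\ forall x t', N x -> Rabs (x - s) < d -> Route D H c' x t' -> t' < t + e.
Proof.
  intros He. set (e' := e / 2). assert (He' : 0 < e') by (unfold e'; lra).
  destruct (Hedge s Ns) as [[Ihs Mhs] [Ils Mls]]. destruct Rt as [Pt Tt].
  assert (Hlt : lam s <= t <= l s) by (split; [apply Mls| apply Mhs]; exact Pt).
  destruct (Rlt_or_le (l s) (t + e')) as [Low|High].
  - destruct (Hl (t + e' - l s) ltac:(lra)) as [d [Hd K]]. exists d. split; [exact Hd|].
    intros x t' Nx Hx [Pt' _]. specialize (K x Hx). apply Rabs_def2 in K.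
    destruct (Hedge x Nx) as [[_ Mh] _]. specialize (Mh t' Pt'). unfold e' in *. lra.
  - assert (HG : c' <= G1 D (s,t)).
    { destruct Tt as [E|[[L I]|[L I]]]; [lra| |lra].
      pose proof (slice_top_unique H s t (l s) I (conj Ihs Mhs)). unfold e' in *. lra. }
    assert (Pte : in_poly H (s, t + e')) by (apply (slice_convex H s t (l s)); auto; lra).
    pose proof (G1_strict_t D H HC s t (t + e') Pt Pte ltac:(lra)) as Hs.
    destruct (derivable_cont_at (g1 D) s (a1 D s) (sh_dg1 D H HC s) (G1 D (s, t+e') - c') ltac:(lra)) as [d1 [Hd1 Hg1]].
    destruct (Hlam (t + e' - lam s) ltac:(lra)) as [d2 [Hd2 Hl2]].
    exists (Rmin d1 d2). split; [apply Rmin_glb_lt; lra|].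
    intros x t' Nx Hx [Pt' Tt'].
    specialize (Hg1 x (Rlt_le_trans _ _ _ Hx (Rmin_l _ _))). apply Rabs_def2 in Hg1.
    specialize (Hl2 x (Rlt_le_trans _ _ _ Hx (Rmin_r _ _))). apply Rabs_def2 in Hl2.
    destruct (Rlt_or_le t' (t + e')) as [Lt|Ge]; [unfold e' in *; lra|].
    (* t' >= t + e' would put the route at the bottom of the slice, above t + e' *)
    assert (HGx : c' < G1 D (x, t + e')) by (unfold G1 in *; simpl in *; lra).
    pose proof (G1_mono_t D H HC x (t+e') t' Ge) as Hm.
    destruct Tt' as [E|[[L I]|[L [_ Mi]]]]; [lra|lra|].
    destruct (Hedge x Nx) as [_ [Il _]].
    assert (Hin : in_poly H (x, t + e')) by (apply (slice_convex H x (lam x) t'); auto; lra).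
    specialize (Mi _ Hin). unfold e' in *. lra.
Qed.

Lemma route_lower_bound e : 0 < e ->
  exists d, 0 < d /\ forall x t', N x -> Rabs (x - s) < d -> Route D H c' x t' -> t - e < t'.
Proof.
  intros He. set (e' := e / 2). assert (He' : 0 < e') by (unfold e'; lra).
  destruct (Hedge s Ns) as [[Ihs Mhs] [Ils Mls]]. destruct Rt as [Pt Tt].
  assert (Hlt : lam s <= t <= l s) by (split; [apply Mls| apply Mhs]; exact Pt).
  destruct (Rlt_or_le (t - e') (lam s)) as [High|Low].
  - destruct (Hlam (lam s - (t - e')) ltac:(lra)) as [d [Hd K]]. exists d. split; [exact Hd|].
    intros x t' Nx Hx [Pt' _]. specialize (K x Hx). apply Rabs_def2 in K.
    destruct (Hedge x Nx) as [_ [_ Ml]]. specialize (Ml t' Pt'). unfold e' in *. lra.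
  - assert (HG : G1 D (s,t) <= c').
    { destruct Tt as [E|[[L I]|[L I]]]; [lra|lra|].
      pose proof (slice_bot_unique H s t (lam s) I (conj Ils Mls)). unfold e' in *. lra. }
    assert (Pte : in_poly H (s, t - e')) by (apply (slice_convex H s (lam s) t); auto; lra).
    pose proof (G1_strict_t D H HC s (t - e') t Pte Pt ltac:(lra)) as Hs.
    destruct (derivable_cont_at (g1 D) s (a1 D s) (sh_dg1 D H HC s) (c' - G1 D (s, t-e')) ltac:(lra)) as [d1 [Hd1 Hg1]].
    destruct (Hl (l s - (t - e')) ltac:(lra)) as [d2 [Hd2 Hl2]].
    exists (Rmin d1 d2). split; [apply Rmin_glb_lt; lra|].
    intros x t' Nx Hx [Pt' Tt'].
    specialize (Hg1 x (Rlt_le_trans _ _ _ Hx (Rmin_l _ _))). apply Rabs_def2 in Hg1.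
    specialize (Hl2 x (Rlt_le_trans _ _ _ Hx (Rmin_r _ _))). apply Rabs_def2 in Hl2.
    destruct (Rlt_or_le (t - e') t') as [Lt|Ge]; [unfold e' in *; lra|].
    (* t' <= t - e' would put the route at the top of the slice, below t - e' *)
    assert (HGx : G1 D (x, t - e') < c') by (unfold G1 in *; simpl in *; lra).
    pose proof (G1_mono_t D H HC x t' (t-e') Ge) as Hm.
    destruct Tt' as [E|[[L [_ Mi]]|[L I]]]; [lra| |lra].
    destruct (Hedge x Nx) as [[Ih _] _].
    assert (Hin : in_poly H (x, t - e')) by (apply (slice_convex H x t' (l x)); auto; lra).
    specialize (Mi _ Hin). unfold e' in *. lra.
Qed.

Lemma route_tends : tends_along D H c' N s t (fun _ t' => t').
Proof.
  intros e He.
  destruct (route_upper_bound e He) as [d1 [Hd1 U]]. destruct (route_lower_bound e He) as [d2 [Hd2 L]].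
  exists (Rmin d1 d2). split; [apply Rmin_glb_lt; lra|].
  intros x t' Nx Hx Rt'.
  specialize (U x t' Nx (Rlt_le_trans _ _ _ Hx (Rmin_l _ _)) Rt').
  specialize (L x t' Nx (Rlt_le_trans _ _ _ Hx (Rmin_r _ _)) Rt').
  apply Rabs_def1; lra.
Qed.

End RouteContinuity.

(* ** The local step of the induction *)

Definition near (s : R) (P : R -> Prop) := exists d, 0 < d /\ forall x, Rabs (x - s) < d -> P x.

Lemma near_and s (P Q : R -> Prop) : near s P -> near s Q -> near s (fun x => P x /\ Q x).
Proof.
  intros [d1 [Hd1 K1]] [d2 [Hd2 K2]]. exists (Rmin d1 d2). split; [apply Rmin_glb_lt; lra|].
  intros x Hx. split; [apply K1| apply K2]; eapply Rlt_le_trans; eauto; [apply Rmin_l| apply Rmin_r].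
Qed.

Lemma near_persist D H c' N s t (Phi Psi : R -> R -> R) :
  tends_along D H c' N s t Phi -> tends_along D H c' N s t Psi ->
  near s (fun x => forall t', N x -> Route D H c' x t' -> Phi s t < Psi s t -> Phi x t' < Psi x t').
Proof.
  intros HPhi HPsi. destruct (radius_if (Phi s t < Psi s t) (fun d => forall x t', N x -> Rabs (x - s) < d ->
    Route D H c' x t' -> Phi x t' < Psi x t')) as [d [Hd K]].
  - intros Hlt.
    destruct (HPhi ((Psi s t - Phi s t) / 2) ltac:(lra)) as [d1 [Hd1 K1]].
    destruct (HPsi ((Psi s t - Phi s t) / 2) ltac:(lra)) as [d2 [Hd2 K2]].
    exists (Rmin d1 d2). split; [apply Rmin_glb_lt; lra|].
    intros x t' Nx Hx Rt.
    specialize (K1 x t' Nx (Rlt_le_trans _ _ _ Hx (Rmin_l _ _)) Rt).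
    specialize (K2 x t' Nx (Rlt_le_trans _ _ _ Hx (Rmin_r _ _)) Rt).
    apply Rabs_def2 in K1, K2. lra.
  - exists d. split; [exact Hd|]. intros x Hx t' Nx Rt Hlt. apply (K Hlt x t'); assumption.
Qed.

Lemma tends_const D H c' N s t c : tends_along D H c' N s t (fun _ _ => c).
Proof. intros e He. exists 1. split; [lra|]. intros. rewrite Rminus_diag, Rabs_R0. exact He. Qed.

Lemma near_route_point D H c' N s t d : 0 < d -> tends_along D H c' N s t (fun _ t' => t') ->
  near s (fun x => forall t', N x -> Route D H c' x t' -> dist2 (x,t') (s,t) < d).
Proof.
  intros Hd Rc. destruct (Rc d Hd) as [d' [Hd' K]]. exists (Rmin d d'). split; [apply Rmin_glb_lt; lra|].
  intros x Hx t' Nx Rt. apply dist2_lt. simpl. split.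
  - eapply Rlt_le_trans; [exact Hx| apply Rmin_l].
  - apply (K x t' Nx); [eapply Rlt_le_trans; [exact Hx| apply Rmin_r]| exact Rt].
Qed.

Definition supp_mult D H c' s t r :=
  (G1 D (s,t) < c' -> forall u, in_poly H u -> snd u + r * fst u <= t + r * s) /\
  (c' < G1 D (s,t) -> forall u, in_poly H u -> t + r * s <= snd u + r * fst u).

(* The multiplier canonically attached to a point of the level set: the slope
   -kappa of the level curve of G1, in whose direction the form is positive. *)
Definition kappa D (X : R2) := mA1 D X / mB1 D X.

Lemma quad_kappa D H (HC : SepHyp D H) X : in_poly H X -> 0 < quad D X (kappa D X).
Proof.
  intros HX. destruct (sh_pos D H HC X HX) as [P1 [P2 P3]]. unfold det_sep in P3. unfold quad, kappa.
  replace (mA0 D X - mA1 D X / mB1 D X * mA1 D X - mA1 D X / mB1 D X * mB0 D X + mA1 D X / mB1 D X * (mA1 D X / mB1 D X) * mB1 D X)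
    with ((mA0 D X * mB1 D X - mB0 D X * mA1 D X) / mB1 D X) by (field; lra).
  apply Rdiv_lt_0_compat; lra.
Qed.

Lemma quad_on_edge D H (HC : SepHyp D H) a b s1 s2 s : In (a,b) H -> snd a <> 0 -> s1 <> s2 ->
  in_poly H (s1, lin a b s1) -> in_poly H (s2, lin a b s2) -> in_poly H (s, lin a b s) ->
  0 < quad D (s, lin a b s) (slope a).
Proof.
  intros Hh Ha Hs H1 H2 H3. apply (sh_edge D H HC a b Hh Ha (s1, lin a b s1) (s2, lin a b s2)); auto;
    try (apply lin_on; auto). intros E. inversion E. auto.
Qed.

(* The local data needed to compare a base route point X = (s,t) with a
   route point Z = (z,t') nearby: the top and bottom constraint lines of the
   slices at s and z, the monotonicity of the Lagrangians available at X, and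
   the strict inequalities that persist from X to Z. *)
Set Implicit Arguments.
Record Frame D H c' (a : R2) (b : R) (a' : R2) (b' : R) (s t z t' : R) : Prop := {
  fr_top_s : slice_top H s (lin a b s);
  fr_bot_s : slice_bot H s (lin a' b' s);
  fr_top_z : slice_top H z (lin a b z);
  fr_bot_z : slice_bot H z (lin a' b' z);
  fr_lagr_top : t = lin a b s ->
    lagr_incr D c' (slope a) (s,t) (z,t') /\ lagr_incr D c' (slope a) (z,t') (s,t);
  fr_lagr_bot : t = lin a' b' s ->
    lagr_incr D c' (slope a') (s,t) (z,t') /\ lagr_incr D c' (slope a') (z,t') (s,t);
  fr_lagr_mid : lagr_incr D c' (kappa D (s,t)) (s,t) (z,t') /\ lagr_incr D c' (kappa D (s,t)) (z,t') (s,t);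
  fr_below_top : t < lin a b s -> t' < lin a b z;
  fr_above_bot : lin a' b' s < t -> lin a' b' z < t';
  fr_G1_lt : G1 D (s,t) < c' -> G1 D (z,t') < c';
  fr_G1_gt : c' < G1 D (s,t) -> c' < G1 D (z,t')
}.
Unset Implicit Arguments.

Lemma frame_near D H (HC : SepHyp D H) c' a b a' b' lo hi s t :
  In (a,b) H -> 0 < snd a -> In (a',b') H -> snd a' < 0 -> lo < hi -> lo <= s <= hi ->
  (forall z, lo <= z <= hi -> slice_top H z (lin a b z) /\ slice_bot H z (lin a' b' z)) ->
  Route D H c' s t ->
  near s (fun z => forall t', lo <= z <= hi -> Route D H c' z t' -> Frame D H c' a b a' b' s t z t').
Proof.
  intros Hab Ha Hab' Ha' Hlohi Hs Hedge Rt.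
  set (N := fun z => lo <= z <= hi). set (X := (s,t)).
  assert (HX : in_poly H X) by apply Rt.
  assert (Rc : tends_along D H c' N s t (fun _ t' => t'))
    by (apply (route_tends D H c' N s t (lin a b) (lin a' b')); auto; apply lin_cont).
  assert (Hline : forall a0 b0, (forall z, N z -> in_poly H (z, lin a0 b0 z)) -> snd a0 <> 0 -> t = lin a0 b0 s ->
                  In (a0,b0) H -> 0 < quad D X (slope a0)).
  { intros a0 b0 Hin Ha0 Et Hab0. unfold X. rewrite Et.
    apply (quad_on_edge D H HC a0 b0 lo hi s); auto; try lra; apply Hin; unfold N; lra. }
  (* each Lagrangian increases near X; Z is eventually that near *)
  assert (Hpair : forall r (C : Prop), (C -> 0 < quad D X r) ->
    near s (fun z => forall t', N z -> Route D H c' z t' -> C -> lagr_incr D c' r X (z,t') /\ lagr_incr D c' r (z,t') X)).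
  { intros r C HQ.
    destruct (radius_if C _ (fun c => lagr_incr_near D H HC X r c' HX (HQ c))) as [d [Hd K]].
    destruct (near_route_point D H c' N s t d Hd Rc) as [d' [Hd' K']].
    exists d'. split; [exact Hd'|]. intros z Hz t' Nz Rz Cz.
    assert (DZ : dist2 (z,t') X < d) by (apply (K' z Hz t' Nz Rz)).
    assert (DX : dist2 X X < d) by (apply dist2_self; exact Hd).
    destruct Rz as [Pz _].
    split; apply (K Cz); assumption. }
  assert (N1 := Hpair (slope a) (t = lin a b s)
    ltac:(intros; apply (Hline a b); auto; [intros; apply Hedge; auto| lra])).
  assert (N2 := Hpair (slope a') (t = lin a' b' s)
    ltac:(intros; apply (Hline a' b'); auto; [intros; apply Hedge; auto| lra])).
  assert (N3 := Hpair (kappa D X) True (fun _ => quad_kappa D H HC X HX)).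
  assert (N4 := near_persist D H c' N s t (fun _ t' => t') (fun x _ => lin a b x) Rc
                  (tends_of_cont D H c' N s t (lin a b) (lin_cont a b s))).
  assert (N5 := near_persist D H c' N s t (fun x _ => lin a' b' x) (fun _ t' => t')
                  (tends_of_cont D H c' N s t (lin a' b') (lin_cont a' b' s)) Rc).
  assert (N6 := near_persist D H c' N s t (fun x t' => G1 D (x,t')) (fun _ _ => c')
                  (tends_G1 D H HC c' N s t Rc) (tends_const D H c' N s t c')).
  assert (N7 := near_persist D H c' N s t (fun _ _ => c') (fun x t' => G1 D (x,t'))
                  (tends_const D H c' N s t c') (tends_G1 D H HC c' N s t Rc)).
  destruct (near_and _ _ _ N1 (near_and _ _ _ N2 (near_and _ _ _ N3 (near_and _ _ _ N4
              (near_and _ _ _ N5 (near_and _ _ _ N6 N7)))))) as [d [Hd K]].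
  exists d. split; [exact Hd|]. intros z Hz t' Nz Rz.
  destruct (K z Hz) as [K1 [K2 [K3 [K4 [K5 [K6 K7]]]]]].
  destruct (Hedge s Hs). destruct (Hedge z Nz).
  constructor; auto.
Qed.

Lemma lagr_mono_mult D c' r1 r2 u : 0 <= (r2 - r1) * (c' - G1 D u) -> lagr D c' r1 u <= lagr D c' r2 u.
Proof. intros Hs. unfold lagr. lra. Qed.

Lemma lagr_level D c' r1 r2 u : G1 D u = c' -> lagr D c' r1 u = lagr D c' r2 u.
Proof. intros E. unfold lagr. rewrite E. ring. Qed.

Lemma supp_top H a b s u : In (a,b) H -> 0 < snd a -> in_poly H u ->
  snd u + slope a * fst u <= lin a b s + slope a * s.
Proof.
  intros Hh Ha Hu. specialize (Hu _ Hh). unfold dot in Hu; simpl in Hu. unfold lin, slope.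
  apply (Rmult_le_reg_l (snd a)); [lra|]. field_simplify; lra.
Qed.

Lemma supp_bot H a b s u : In (a,b) H -> snd a < 0 -> in_poly H u ->
  lin a b s + slope a * s <= snd u + slope a * fst u.
Proof.
  intros Hh Ha Hu. specialize (Hu _ Hh). unfold dot in Hu; simpl in Hu. unfold lin, slope.
  apply (Rmult_le_reg_l (- snd a)); [lra|].
  replace (- snd a * ((b - fst a * s) / snd a + fst a / snd a * s)) with (- b) by (field; lra).
  replace (- snd a * (snd u + fst a / snd a * fst u)) with (- (fst a * fst u + snd a * snd u)) by (field; lra).
  lra.
Qed.

Lemma mult_top_le D H c' a b s1 s2 r : In (a,b) H -> 0 < snd a ->
  G1 D (s2, lin a b s2) < c' -> supp_mult D H c' s2 (lin a b s2) r -> in_poly H (s1, lin a b s1) ->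
  0 <= (r - slope a) * (s2 - s1).
Proof.
  intros Hh Ha HG [Hup _] Hin. specialize (Hup HG _ Hin). simpl in Hup.
  rewrite (lin_affine a b s2 s1) in Hup by lra. lra.
Qed.

Lemma mult_bot_le D H c' a b s1 s2 r : In (a,b) H -> snd a < 0 ->
  c' < G1 D (s2, lin a b s2) -> supp_mult D H c' s2 (lin a b s2) r -> in_poly H (s1, lin a b s1) ->
  0 <= (slope a - r) * (s2 - s1).
Proof.
  intros Hh Ha HG [_ Hlo] Hin. specialize (Hlo HG _ Hin). simpl in Hlo.
  rewrite (lin_affine a b s2 s1) in Hlo by lra. lra.
Qed.

Lemma route_top D H c' s t l : Route D H c' s t -> G1 D (s,t) < c' -> slice_top H s l -> t = l.
Proof. intros [_ [E|[[_ I]|[L _]]]] HG Hl; [lra| apply (slice_top_unique H s); assumption| lra]. Qed.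

Lemma route_bot D H c' s t l : Route D H c' s t -> c' < G1 D (s,t) -> slice_bot H s l -> t = l.
Proof. intros [_ [E|[[L _]|[_ I]]]] HG Hl; [lra| lra| apply (slice_bot_unique H s); assumption]. Qed.

Section Step.
Variables (D : SepMap) (H : halfspaces) (c' : R) (a : R2) (b : R) (a' : R2) (b' : R) (s t z t' : R).
Hypothesis Hab : In (a,b) H.
Hypothesis Ha : 0 < snd a.
Hypothesis Hab' : In (a',b') H.
Hypothesis Ha' : snd a' < 0.
Hypothesis RX : Route D H c' s t.
Hypothesis RZ : Route D H c' z t'.
Hypothesis HF : Frame D H c' a b a' b' s t z t'.

Local Notation X := (s,t).
Local Notation Z := (z,t').

Lemma lin_z_top : lin a b z = lin a b s - slope a * (z - s).
Proof. apply lin_affine. lra. Qed.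
Lemma lin_z_bot : lin a' b' z = lin a' b' s - slope a' * (z - s).
Proof. apply lin_affine. lra. Qed.

Lemma between_lines : lin a' b' s <= t <= lin a b s /\ lin a' b' z <= t' <= lin a b z.
Proof.
  destruct RX as [PX _]. destruct RZ as [PZ _].
  split; split; [apply (fr_bot_s HF)| apply (fr_top_s HF)|
                 apply (fr_bot_z HF)| apply (fr_top_z HF)]; assumption.
Qed.

Lemma top_back : t' = lin a b z -> t = lin a b s.
Proof.
  intros E. destruct between_lines as [[_ L] _]. destruct (Rle_lt_or_eq_dec _ _ L) as [Lt|]; [|assumption].
  pose proof (fr_below_top HF Lt). lra.
Qed.

Lemma bot_back : t' = lin a' b' z -> t = lin a' b' s.
Proof.
  intros E. destruct between_lines as [[L _] _]. destruct (Rle_lt_or_eq_dec _ _ L) as [Lt|]; [|symmetry; assumption].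
  pose proof (fr_above_bot HF Lt). lra.
Qed.

Lemma X_top : G1 D X < c' -> t = lin a b s.
Proof. intros HG. apply (route_top D H c' s t _ RX HG (fr_top_s HF)). Qed.
Lemma X_bot : c' < G1 D X -> t = lin a' b' s.
Proof. intros HG. apply (route_bot D H c' s t _ RX HG (fr_bot_s HF)). Qed.
Lemma Z_top : G1 D Z < c' -> t' = lin a b z.
Proof. intros HG. apply (route_top D H c' z t' _ RZ HG (fr_top_z HF)). Qed.
Lemma Z_bot : c' < G1 D Z -> t' = lin a' b' z.
Proof. intros HG. apply (route_bot D H c' z t' _ RZ HG (fr_bot_z HF)). Qed.

Lemma supp_mult_top x : G1 D (x, lin a b x) <= c' -> supp_mult D H c' x (lin a b x) (slope a).
Proof. intros HG. split; [intros; apply (supp_top H); assumption| intros; lra]. Qed.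
Lemma supp_mult_bot x : c' <= G1 D (x, lin a' b' x) -> supp_mult D H c' x (lin a' b' x) (slope a').
Proof. intros HG. split; [intros; lra| intros; apply (supp_bot H); assumption]. Qed.

Lemma lagr_top_XZ : t = lin a b s -> s < z -> (t' - lin a b z) * (G1 D Z - G1 D X) <= 0 ->
  lagr D c' (slope a) X < lagr D c' (slope a) Z.
Proof.
  intros Et Hsz Hc. apply (proj1 (fr_lagr_top HF Et)); simpl; [lra|].
  rewrite lin_z_top, <- Et in Hc. replace (t' - t + slope a * (z - s)) with (t' - (t - slope a * (z - s))) by ring. exact Hc.
Qed.

Lemma lagr_top_ZX : t = lin a b s -> z < s -> (lin a b z - t') * (G1 D X - G1 D Z) <= 0 ->
  lagr D c' (slope a) Z < lagr D c' (slope a) X.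
Proof.
  intros Et Hzs Hc. apply (proj2 (fr_lagr_top HF Et)); simpl; [lra|].
  rewrite lin_z_top, <- Et in Hc. replace (t - t' + slope a * (s - z)) with (t - slope a * (z - s) - t') by ring. exact Hc.
Qed.

Lemma lagr_bot_XZ : t = lin a' b' s -> s < z -> (t' - lin a' b' z) * (G1 D Z - G1 D X) <= 0 ->
  lagr D c' (slope a') X < lagr D c' (slope a') Z.
Proof.
  intros Et Hsz Hc. apply (proj1 (fr_lagr_bot HF Et)); simpl; [lra|].
  rewrite lin_z_bot, <- Et in Hc. replace (t' - t + slope a' * (z - s)) with (t' - (t - slope a' * (z - s))) by ring. exact Hc.
Qed.

Lemma lagr_bot_ZX : t = lin a' b' s -> z < s -> (lin a' b' z - t') * (G1 D X - G1 D Z) <= 0 ->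
  lagr D c' (slope a') Z < lagr D c' (slope a') X.
Proof.
  intros Et Hzs Hc. apply (proj2 (fr_lagr_bot HF Et)); simpl; [lra|].
  rewrite lin_z_bot, <- Et in Hc. replace (t - t' + slope a' * (s - z)) with (t - slope a' * (z - s) - t') by ring. exact Hc.
Qed.

Lemma lagr_mid_XZ : G1 D Z = G1 D X -> s < z -> lagr D c' (kappa D X) X < lagr D c' (kappa D X) Z.
Proof. intros E Hsz. apply (proj1 (fr_lagr_mid HF)); simpl; [lra|]. rewrite E. lra. Qed.

Lemma lagr_mid_ZX : G1 D Z = G1 D X -> z < s -> lagr D c' (kappa D X) Z < lagr D c' (kappa D X) X.
Proof. intros E Hzs. apply (proj2 (fr_lagr_mid HF)); simpl; [lra|]. rewrite E. lra. Qed.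

Lemma right_step : s < z -> forall r', supp_mult D H c' z t' r' ->
  exists r, supp_mult D H c' s t r /\ lagr D c' r X < lagr D c' r' Z.
Proof.
  intros Hsz r' Hm. destruct between_lines as [[Lx Ux] [Lz Uz]].
  destruct (Rtotal_order (G1 D Z) c') as [GZ|[GZ|GZ]].
  - (* Z at the top of its slice, hence so is X *)
    assert (Et' := Z_top GZ). assert (Et := top_back Et').
    assert (GX : G1 D X <= c') by (apply Rnot_lt_le; intros L; pose proof (fr_G1_gt HF L); lra).
    exists (slope a). split; [rewrite Et; apply supp_mult_top; rewrite <- Et; exact GX|].
    rewrite Et' in Hm, GZ.
    pose proof (mult_top_le D H c' a b s z r' Hab Ha GZ Hm (proj1 (fr_top_s HF))).
    assert (lagr D c' (slope a) Z <= lagr D c' r' Z).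
    { apply lagr_mono_mult. rewrite Et'. apply Rmult_le_pos; [nra| lra]. }
    assert (lagr D c' (slope a) X < lagr D c' (slope a) Z) by (apply lagr_top_XZ; auto; rewrite Et'; lra).
    lra.
  - (* Z on the level set: choose the multiplier from the position of X *)
    destruct (Rtotal_order (G1 D X) c') as [GX|[GX|GX]].
    + exists (slope a). assert (Et := X_top GX).
      split; [rewrite Et; apply supp_mult_top; rewrite <- Et; lra|].
      rewrite (lagr_level D c' r' (slope a) Z GZ). apply lagr_top_XZ; auto.
      nra.
    + exists (kappa D X). split; [split; intros; lra|].
      rewrite (lagr_level D c' r' (kappa D X) Z GZ). apply lagr_mid_XZ; [lra|assumption].
    + exists (slope a'). assert (Et := X_bot GX).
      split; [rewrite Et; apply supp_mult_bot; rewrite <- Et; lra|].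
      rewrite (lagr_level D c' r' (slope a') Z GZ). apply lagr_bot_XZ; auto.
      nra.
  - (* Z at the bottom of its slice, hence so is X *)
    assert (Et' := Z_bot GZ). assert (Et := bot_back Et').
    assert (GX : c' <= G1 D X) by (apply Rnot_lt_le; intros L; pose proof (fr_G1_lt HF L); lra).
    exists (slope a'). split; [rewrite Et; apply supp_mult_bot; rewrite <- Et; exact GX|].
    rewrite Et' in Hm, GZ.
    pose proof (mult_bot_le D H c' a' b' s z r' Hab' Ha' GZ Hm (proj1 (fr_bot_s HF))).
    assert (lagr D c' (slope a') Z <= lagr D c' r' Z).
    { apply lagr_mono_mult. rewrite Et'. replace ((r' - slope a') * (c' - G1 D (z, lin a' b' z)))
        with ((slope a' - r') * (G1 D (z, lin a' b' z) - c')) by ring. apply Rmult_le_pos; [nra| lra]. }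
    assert (lagr D c' (slope a') X < lagr D c' (slope a') Z) by (apply lagr_bot_XZ; auto; rewrite Et'; lra).
    lra.
Qed.

Lemma left_step : z < s -> forall r0, supp_mult D H c' s t r0 ->
  exists r', supp_mult D H c' z t' r' /\ lagr D c' r' Z < lagr D c' r0 X.
Proof.
  intros Hzs r0 Hm. destruct between_lines as [[Lx Ux] [Lz Uz]].
  destruct (Rtotal_order (G1 D X) c') as [GX|[GX|GX]].
  - (* X at the top of its slice, hence so is Z *)
    assert (Et := X_top GX). assert (GZ := fr_G1_lt HF GX). assert (Et' := Z_top GZ).
    exists (slope a). split; [rewrite Et'; apply supp_mult_top; rewrite <- Et'; lra|].
    rewrite Et in Hm, GX.
    pose proof (mult_top_le D H c' a b z s r0 Hab Ha GX Hm (proj1 (fr_top_z HF))).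
    assert (lagr D c' (slope a) X <= lagr D c' r0 X).
    { apply lagr_mono_mult. rewrite Et. apply Rmult_le_pos; [nra| lra]. }
    assert (lagr D c' (slope a) Z < lagr D c' (slope a) X) by (apply lagr_top_ZX; auto; rewrite Et'; lra).
    lra.
  - (* X on the level set: choose the multiplier from the position of Z *)
    destruct (Rtotal_order (G1 D Z) c') as [GZ|[GZ|GZ]].
    + exists (slope a). assert (Et' := Z_top GZ). assert (Et := top_back Et').
      split; [rewrite Et'; apply supp_mult_top; rewrite <- Et'; lra|].
      rewrite (lagr_level D c' r0 (slope a) X GX). apply lagr_top_ZX; auto. rewrite Et'. lra.
    + exists (kappa D X). split; [split; intros; lra|].
      rewrite (lagr_level D c' r0 (kappa D X) X GX). apply lagr_mid_ZX; [lra|assumption].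
    + exists (slope a'). assert (Et' := Z_bot GZ). assert (Et := bot_back Et').
      split; [rewrite Et'; apply supp_mult_bot; rewrite <- Et'; lra|].
      rewrite (lagr_level D c' r0 (slope a') X GX). apply lagr_bot_ZX; auto. rewrite Et'. lra.
  - (* X at the bottom of its slice, hence so is Z *)
    assert (Et := X_bot GX). assert (GZ := fr_G1_gt HF GX). assert (Et' := Z_bot GZ).
    exists (slope a'). split; [rewrite Et'; apply supp_mult_bot; rewrite <- Et'; lra|].
    rewrite Et in Hm, GX.
    pose proof (mult_bot_le D H c' a' b' z s r0 Hab' Ha' GX Hm (proj1 (fr_bot_z HF))).
    assert (lagr D c' (slope a') X <= lagr D c' r0 X).
    { apply lagr_mono_mult. rewrite Et. replace ((r0 - slope a') * (c' - G1 D (s, lin a' b' s)))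
        with ((slope a' - r0) * (G1 D (s, lin a' b' s) - c')) by ring. apply Rmult_le_pos; [nra| lra]. }
    assert (lagr D c' (slope a') Z < lagr D c' (slope a') X) by (apply lagr_bot_ZX; auto; rewrite Et'; lra).
    lra.
Qed.
End Step.

Lemma edges_right H s d0 : bounded H -> 0 < d0 ->
  (forall z, s <= z <= s + d0 -> exists t, in_poly H (z,t)) ->
  exists de a b a' b', 0 < de /\ de <= d0 /\ In (a,b) H /\ 0 < snd a /\ In (a',b') H /\ snd a' < 0 /\
    forall z, s <= z <= s + de -> slice_top H z (lin a b z) /\ slice_bot H z (lin a' b' z).
Proof.
  intros Hb Hd Hne.
  destruct (upper_right_edge H s d0 Hb Hd Hne) as [du [a [b [Hdu [Hdu' [Hab [Ha Eu]]]]]]].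
  destruct (lower_right_edge H s d0 Hb Hd Hne) as [dl [a' [b' [Hdl [Hdl' [Hab' [Ha' El]]]]]]].
  pose proof (Rmin_l du dl). pose proof (Rmin_r du dl).
  exists (Rmin du dl), a, b, a', b'. split; [apply Rmin_glb_lt; lra|]. split; [lra|].
  do 4 (split; [assumption|]). intros z Hz. split; [apply Eu| apply El]; lra.
Qed.

Lemma edges_left H s d0 : bounded H -> 0 < d0 ->
  (forall z, s - d0 <= z <= s -> exists t, in_poly H (z,t)) ->
  exists de a b a' b', 0 < de /\ de <= d0 /\ In (a,b) H /\ 0 < snd a /\ In (a',b') H /\ snd a' < 0 /\
    forall z, s - de <= z <= s -> slice_top H z (lin a b z) /\ slice_bot H z (lin a' b' z).
Proof.
  intros Hb Hd Hne.
  destruct (upper_left_edge H s d0 Hb Hd Hne) as [du [a [b [Hdu [Hdu' [Hab [Ha Eu]]]]]]].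
  destruct (lower_left_edge H s d0 Hb Hd Hne) as [dl [a' [b' [Hdl [Hdl' [Hab' [Ha' El]]]]]]].
  pose proof (Rmin_l du dl). pose proof (Rmin_r du dl).
  exists (Rmin du dl), a, b, a', b'. split; [apply Rmin_glb_lt; lra|]. split; [lra|].
  do 4 (split; [assumption|]). intros z Hz. split; [apply Eu| apply El]; lra.
Qed.

Lemma right_core D H (HC : SepHyp D H) c' x0 y0 s :
  (forall z, x0 <= z <= y0 -> exists t, in_poly H (z,t)) -> x0 <= s < y0 ->
  exists d, 0 < d /\ forall z t' r', s < z < s + d -> z <= y0 -> Route D H c' z t' -> supp_mult D H c' z t' r' ->
    exists t r, Route D H c' s t /\ supp_mult D H c' s t r /\ lagr D c' r (s,t) < lagr D c' r' (z,t').
Proof.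
  intros Hsl Hs.
  destruct (Hsl s ltac:(lra)) as [t0 Ht0]. destruct (route_exists D H HC c' s t0 Ht0) as [t Rt].
  destruct (edges_right H s (y0 - s) (sh_bnd D H HC) ltac:(lra) ltac:(intros z Hz; apply Hsl; lra))
    as [de [a [b [a' [b' [Hde [Hde' [Hab [Ha [Hab' [Ha' Hedge]]]]]]]]]]].
  destruct (frame_near D H HC c' a b a' b' s (s + de) s t Hab Ha Hab' Ha' ltac:(lra) ltac:(lra) Hedge Rt)
    as [d [Hd K]].
  exists (Rmin d de). split; [apply Rmin_glb_lt; lra|].
  intros z t' r' Hz Hzy Rz Hm. pose proof (Rmin_l d de). pose proof (Rmin_r d de).
  assert (HF := K z ltac:(rewrite Rabs_right; lra) t' ltac:(lra) Rz).
  destruct (right_step D H c' a b a' b' s t z t' Hab Ha Hab' Ha' Rt Rz HF ltac:(lra) r' Hm) as [r [Hr Hlt]].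
  exists t, r. auto.
Qed.

Lemma left_core D H (HC : SepHyp D H) c' x0 y0 s :
  (forall z, x0 <= z <= y0 -> exists t, in_poly H (z,t)) -> x0 < s <= y0 ->
  forall t r0, Route D H c' s t -> supp_mult D H c' s t r0 ->
  exists d, 0 < d /\ forall z, s - d < z < s -> x0 <= z ->
    exists t' r', Route D H c' z t' /\ supp_mult D H c' z t' r' /\ lagr D c' r' (z,t') < lagr D c' r0 (s,t).
Proof.
  intros Hsl Hs t r0 Rt Hm.
  destruct (edges_left H s (s - x0) (sh_bnd D H HC) ltac:(lra) ltac:(intros z Hz; apply Hsl; lra))
    as [de [a [b [a' [b' [Hde [Hde' [Hab [Ha [Hab' [Ha' Hedge]]]]]]]]]]].
  destruct (frame_near D H HC c' a b a' b' (s - de) s s t Hab Ha Hab' Ha' ltac:(lra) ltac:(lra) Hedge Rt)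
    as [d [Hd K]].
  exists (Rmin d de). split; [apply Rmin_glb_lt; lra|].
  intros z Hz Hzx. pose proof (Rmin_l d de). pose proof (Rmin_r d de).
  destruct (Hsl z ltac:(lra)) as [t0 Ht0]. destruct (route_exists D H HC c' z t0 Ht0) as [t' Rz].
  assert (HF := K z ltac:(rewrite Rabs_left; lra) t' ltac:(lra) Rz).
  destruct (left_step D H c' a b a' b' s t z t' Hab Ha Hab' Ha' Rt Rz HF ltac:(lra) r0 Hm) as [r' [Hr Hlt]].
  exists t', r'. auto.
Qed.

Definition Good D H c c' s :=
  forall t r, Route D H c' s t -> supp_mult D H c' s t r -> c < lagr D c' r (s,t).

(* Two points of H in "anti-monotone" position (x left of and above y) cannot
   have the same image: along the route of the level G1 x from x to y the
   Lagrangian stays above G0 x, while at y it equals G0 y. *)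
Lemma sep_no_antimonotone_pair D H (HC : SepHyp D H) x y : in_poly H x -> in_poly H y ->
  fst x < fst y -> snd y < snd x -> G0 D x = G0 D y -> G1 D x = G1 D y -> False.
Proof.
  intros Hx Hy H1 H2 E0 E1.
  set (c := G0 D x). set (c' := G1 D x).
  assert (Hsl : forall z, fst x <= z <= fst y -> exists t, in_poly H (z,t)).
  { intros z Hz. destruct (segment_point H fst x y z ltac:(reflexivity) Hx Hy) as [u [Hu Eu]].
    { rewrite Rmin_left, Rmax_right by lra. exact Hz. }
    exists (snd u). destruct u. simpl in *. subst. exact Hu. }
  assert (Rx : Route D H c' (fst x) (snd x)) by (destruct x; split; [exact Hx| left; reflexivity]).
  assert (Ry : Route D H c' (fst y) (snd y)) by (destruct y; split; [exact Hy| left; unfold c'; simpl; symmetry; exact E1]).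
  assert (GY : Good D H c c' (fst y)).
  { apply (real_induction (fst x) (fst y)); [exact H1| |].
    - intros s Hs Hor. destruct (right_core D H HC c' (fst x) (fst y) s Hsl Hs) as [d [Hd K]].
      exists d. split; [exact Hd|]. intros z Hz Hzy t' r' Rt' Vt'.
      destruct (K z t' r' Hz Hzy Rt' Vt') as [t [r [Rt [Vt Lt]]]].
      destruct Hor as [Es|Gs].
      + (* at the start the route point is x itself, where the Lagrangian is c *)
        subst s. assert (t = snd x) by (apply (route_unique D H HC c' (fst x)); assumption). subst t.
        assert (lagr D c' r (fst x, snd x) = c) by (unfold lagr, c, c'; destruct x; simpl; ring). lra.
      + specialize (Gs t r Rt Vt). lra.
    - intros s Hs Hbelow t r0 Rt Vt.
      destruct (left_core D H HC c' (fst x) (fst y) s Hsl Hs t r0 Rt Vt) as [d [Hd K]].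
      set (z := s - Rmin d (s - fst x) / 2).
      assert (0 < Rmin d (s - fst x)) by (apply Rmin_glb_lt; lra).
      pose proof (Rmin_l d (s - fst x)). pose proof (Rmin_r d (s - fst x)).
      destruct (K z ltac:(unfold z; lra) ltac:(unfold z; lra)) as [t' [r' [Rt' [Vt' Lt]]]].
      specialize (Hbelow z ltac:(unfold z; lra) t' r' Rt' Vt'). lra. }
  (* at y, which lies on the level set, the Lagrangian with multiplier 0 is G0 y = c *)
  assert (Vy : supp_mult D H c' (fst y) (snd y) 0) by (split; intros L; destruct y; unfold c' in *; simpl in *; lra).
  specialize (GY (snd y) 0 Ry Vy). unfold lagr in GY. destruct y. simpl in GY. unfold c in GY. rewrite E0 in GY. lra.
Qed.

(* Two componentwise ordered points of H with the same image coincide, by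
   strict monotonicity of g0 and h1 along the segment joining them. *)
Lemma sep_inj_ordered D H (HC : SepHyp D H) u v : in_poly H u -> in_poly H v ->
  fst u <= fst v -> snd u <= snd v -> G0 D u = G0 D v -> G1 D u = G1 D v -> u = v.
Proof.
  intros Hu Hv L1 L2 F0 F1.
  pose proof (sh_mg0 D H HC _ _ L1). pose proof (sh_mh0 D H HC _ _ L2).
  pose proof (sh_mg1 D H HC _ _ L1). pose proof (sh_mh1 D H HC _ _ L2).
  unfold G0, G1 in *.
  assert (Ef : fst u = fst v).
  { destruct (Rle_lt_or_eq_dec _ _ L1) as [Lt|Eq]; [exfalso|exact Eq].
    destruct (MVT_cor2 (g0 D) (a0 D) (fst u) (fst v) Lt (fun c _ => sh_dg0 D H HC c)) as [c [Ec Hc]].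
    destruct (segment_point H fst u v c ltac:(reflexivity) Hu Hv) as [w [Hw Ew]]. { rewrite Rmin_left, Rmax_right by lra. lra. }
    destruct (sh_pos D H HC w Hw) as [Pa _]. unfold mA0 in Pa. rewrite Ew in Pa.
    assert (0 < a0 D c * (fst v - fst u)) by (apply Rmult_lt_0_compat; lra). lra. }
  assert (Es : snd u = snd v).
  { destruct (Rle_lt_or_eq_dec _ _ L2) as [Lt|Eq]; [exfalso|exact Eq].
    destruct (MVT_cor2 (h1 D) (b1 D) (snd u) (snd v) Lt (fun c _ => sh_dh1 D H HC c)) as [c [Ec Hc]].
    destruct (segment_point H snd u v c ltac:(reflexivity) Hu Hv) as [w [Hw Ew]]. { rewrite Rmin_left, Rmax_right by lra. lra. }
    destruct (sh_pos D H HC w Hw) as [_ [Pb _]]. unfold mB1 in Pb. rewrite Ew in Pb.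
    assert (0 < b1 D c * (snd v - snd u)) by (apply Rmult_lt_0_compat; lra). lra. }
  destruct u, v; simpl in *; subst; reflexivity.
Qed.

Lemma sep_injective D H (HC : SepHyp D H) x y : in_poly H x -> in_poly H y ->
  G0 D x = G0 D y -> G1 D x = G1 D y -> x = y.
Proof.
  intros Hx Hy E0 E1.
  destruct (Rle_or_lt (fst x) (fst y)) as [L1|L1]; destruct (Rle_or_lt (snd x) (snd y)) as [L2|L2].
  - apply (sep_inj_ordered D H HC); auto.
  - destruct (Rle_lt_or_eq_dec _ _ L1) as [Lt|Eq].
    + exfalso. apply (sep_no_antimonotone_pair D H HC x y); auto.
    + symmetry. apply (sep_inj_ordered D H HC); auto; lra.
  - destruct (Rle_lt_or_eq_dec _ _ L2) as [Lt|Eq].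
    + exfalso. apply (sep_no_antimonotone_pair D H HC y x); auto.
    + symmetry. apply (sep_inj_ordered D H HC); auto; lra.
  - symmetry. apply (sep_inj_ordered D H HC); auto; lra.
Qed.

(* ** The model *)

Lemma mat_dist_entries M N e : mat_dist M N < e ->
  Rabs (fst (fst M) - fst (fst N)) < e /\ Rabs (snd (fst M) - snd (fst N)) < e /\
  Rabs (fst (snd M) - fst (snd N)) < e /\ Rabs (snd (snd M) - snd (snd N)) < e.
Proof.
  unfold mat_dist. intros Hm.
  assert (H1 : dist2 (fst M) (fst N) < e) by (eapply Rle_lt_trans; [apply Rmax_l| exact Hm]).
  assert (H2 : dist2 (snd M) (snd N) < e) by (eapply Rle_lt_trans; [apply Rmax_r| exact Hm]).
  apply dist2_lt in H1. apply dist2_lt in H2. tauto.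
Qed.

Lemma nonsingular_near A B C E : A*E - B*C <> 0 ->
  exists e, 0 < e /\ forall a b c d x y, Rabs (a - A) < e -> Rabs (b - B) < e -> Rabs (c - C) < e -> Rabs (d - E) < e ->
    a*x + b*y = 0 -> c*x + d*y = 0 -> x = 0 /\ y = 0.
Proof.
  intros Hdet. set (D0 := Rabs (A*E - B*C)). assert (HD : 0 < D0) by (apply Rabs_pos_lt; exact Hdet).
  set (K := Rabs A + Rabs B + Rabs C + Rabs E + 2).
  pose proof (Rabs_pos A). pose proof (Rabs_pos B). pose proof (Rabs_pos C). pose proof (Rabs_pos E).
  assert (HK : 2 <= K) by (unfold K; lra).
  exists (Rmin 1 (D0 / (2*K))). split; [apply Rmin_glb_lt; [lra| apply Rdiv_lt_0_compat; lra]|].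
  intros a b c d x y Ha Hb Hc Hd E1 E2.
  assert (Ee1 : Rmin 1 (D0 / (2*K)) <= 1) by apply Rmin_l.
  assert (Ee2 : Rmin 1 (D0 / (2*K)) * (2*K) <= D0).
  { apply Rle_trans with (D0 / (2*K) * (2*K)); [apply Rmult_le_compat_r; [lra| apply Rmin_r]| right; field; lra]. }
  set (e := Rmin 1 (D0 / (2*K))) in *. clearbody e.
  pose proof (abs_le_between _ _ (mul_close a d A E e Ee1 Ha Hd)).
  pose proof (abs_le_between _ _ (mul_close b c B C e Ee1 Hb Hc)).
  assert (Hne : a*d - b*c <> 0).
  { intros Z. assert (Rabs (A*E - B*C) <= e * K) by (apply Rabs_le; unfold K in *; lra). unfold D0 in *. lra. }
  (* Cramer's rule *)
  assert (Hx : x * (a*d - b*c) = 0) by (replace (x * (a*d - b*c)) with (d*(a*x + b*y) - b*(c*x + d*y)) by ring; rewrite E1, E2; ring).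
  assert (Hy : y * (a*d - b*c) = 0) by (replace (y * (a*d - b*c)) with (a*(c*x + d*y) - c*(a*x + b*y)) by ring; rewrite E1, E2; ring).
  apply Rmult_integral in Hx, Hy. tauto.
Qed.

Lemma between_abs x y c d : Rmin x y <= c <= Rmax x y -> Rabs (y - x) < d -> Rabs (c - x) < d.
Proof.
  intros Hc Hy. apply Rabs_def2 in Hy. destruct (Rle_or_lt x y) as [L|L].
  - rewrite Rmin_left, Rmax_right in Hc by lra. apply Rabs_def1; lra.
  - rewrite Rmin_right, Rmax_left in Hc by lra. apply Rabs_def1; lra.
Qed.

(* By the mean value theorem,
   Pi y - Pi q = M (y - q) where the entries of M are entries of dPi at
   points within |y - q| of q along the coordinate axes; M is nonsingular
   when y is close to q. *)
Lemma local_identification tau p F f q : model p F f -> Pi tau p F q = (0,0) ->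
  cont_on (fun _ => True) (dPi p f) -> det2 (dPi p f q) <> 0 ->
  exists eps, 0 < eps /\ forall y, dist2 y q < eps -> Pi tau p F y = (0,0) -> y = q.
Proof.
  intros [_ [_ [_ [_ Hder]]]] Hq Hc Hdet.
  unfold det2, dPi in Hdet; simpl in Hdet.
  destruct (nonsingular_near _ _ _ _ Hdet) as [e [He K]].
  destruct (Hc q I e He) as [d [Hd Kc]].
  exists d. split; [exact Hd|]. intros y Hy Hpy.
  apply dist2_lt in Hy. destruct Hy as [Hy0 Hy1].
  assert (Hs : forall x, Rmin (fst q) (fst y) <= x <= Rmax (fst q) (fst y) -> mat_dist (dPi p f (x, snd q)) (dPi p f q) < e).
  { intros x Hx. apply Kc; [exact I|]. apply dist2_lt. simpl. rewrite Rminus_diag, Rabs_R0.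
    split; [apply (between_abs _ _ _ _ Hx Hy0)| exact Hd]. }
  assert (Ht : forall x, Rmin (snd q) (snd y) <= x <= Rmax (snd q) (snd y) -> mat_dist (dPi p f (fst q, x)) (dPi p f q) < e).
  { intros x Hx. apply Kc; [exact I|]. apply dist2_lt. simpl. rewrite Rminus_diag, Rabs_R0.
    split; [exact Hd| apply (between_abs _ _ _ _ Hx Hy1)]. }
  destruct (mvt_between (F false false) (f false false) (fst q) (fst y) (Hder false false)) as [x0 [Hx0 E0]].
  destruct (mvt_between (F false true) (f false true) (fst q) (fst y) (Hder false true)) as [x1 [Hx1 E1]].
  destruct (mvt_between (F true false) (f true false) (snd q) (snd y) (Hder true false)) as [y0 [Hy0' F0]].
  destruct (mvt_between (F true true) (f true true) (snd q) (snd y) (Hder true true)) as [y1 [Hy1' F1]].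
  destruct (mat_dist_entries _ _ _ (Hs x0 Hx0)) as [M0 _].
  destruct (mat_dist_entries _ _ _ (Hs x1 Hx1)) as [_ [_ [M1 _]]].
  destruct (mat_dist_entries _ _ _ (Ht y0 Hy0')) as [_ [M2 _]].
  destruct (mat_dist_entries _ _ _ (Ht y1 Hy1')) as [_ [_ [_ M3]]].
  unfold dPi, fYD in M0, M1, M2, M3; simpl in M0, M1, M2, M3.
  unfold Pi, Pi_comp in Hq, Hpy. injection Hq as Q0 Q1. injection Hpy as P0 P1.
  destruct (K _ _ _ _ (fst y - fst q) (snd y - snd q) M0 M2 M1 M3) as [Z0 Z1].
  - replace (f false false x0 * p false false * (fst y - fst q) + f true false y0 * p true false * (snd y - snd q))
      with (p false false * (F false false (fst y) - F false false (fst q)) + p true false * (F true false (snd y) - F true false (snd q)))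
      by (rewrite E0, F0; ring). lra.
  - replace (f false true x1 * p false true * (fst y - fst q) + f true true y1 * p true true * (snd y - snd q))
      with (p false true * (F false true (fst y) - F false true (fst q)) + p true true * (F true true (snd y) - F true true (snd q)))
      by (rewrite E1, F1; ring). lra.
  - destruct y, q; simpl in *. f_equal; lra.
Qed.

(* The components of Pi, up to the constant tau, form a separable map; the
   rows are taken in the order (z0, z1). *)
Definition sep_of_model (p : bool -> bool -> R) (F f : bool -> bool -> R -> R) (z0 z1 : bool) : SepMap :=
  mkSep (fun s => p false z0 * F false z0 s) (fun s => p false z1 * F false z1 s)
        (fun t => p true z0 * F true z0 t) (fun t => p true z1 * F true z1 t)
        (fun s => fYD p f s false z0) (fun s => fYD p f s false z1)
        (fun t => fYD p f t true z0) (fun t => fYD p f t true z1).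

Definition row_order (sw : bool) : bool * bool := if sw then (true, false) else (false, true).
Definition rearrange (sw : bool) : mat2 -> mat2 := if sw then swap_rows else (fun M => M).
Definition model_sep p F f sw := sep_of_model p F f (fst (row_order sw)) (snd (row_order sw)).

Lemma rearrange_dPi p F f sw u :
  rearrange sw (dPi p f u) = ((mA0 (model_sep p F f sw) u, mB0 (model_sep p F f sw) u),
                              (mA1 (model_sep p F f sw) u, mB1 (model_sep p F f sw) u)).
Proof. destruct sw; reflexivity. Qed.

Lemma span_polytope H : is_polytope H -> forall v, span_face (in_poly H) v.
Proof.
  intros [_ [y [eps [He Hin]]]] v.
  set (n := vnorm v).
  assert (Hn : 0 <= n) by (unfold n, vnorm; pose proof (Rabs_pos (fst v)); pose proof (Rmax_l (Rabs (fst v)) (Rabs (snd v))); lra).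
  set (l := eps / (2 * (n + 1))). assert (Hl : 0 < l) by (unfold l; apply Rdiv_lt_0_compat; lra).
  set (u := (fst y + l * fst v, snd y + l * snd v)).
  assert (Hu : in_poly H u).
  { apply Hin. apply dist2_lt. unfold u; simpl.
    replace (fst y + l * fst v - fst y) with (l * fst v) by ring.
    replace (snd y + l * snd v - snd y) with (l * snd v) by ring.
    rewrite !Rabs_mult, !(Rabs_right l) by lra.
    assert (Rabs (fst v) <= n) by apply Rmax_l. assert (Rabs (snd v) <= n) by apply Rmax_r.
    assert (l * n < eps).
    { apply Rle_lt_trans with (eps / 2); [|lra].
      apply (Rmult_le_reg_r (2 * (n + 1))); [lra|].
      replace (l * n * (2 * (n + 1))) with (eps * n) by (unfold l; field; lra).
      replace (eps / 2 * (2 * (n + 1))) with (eps * (n + 1)) by field. nra. }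
    split; nra. }
  assert (Hy : in_poly H y) by (apply Hin, dist2_self; exact He).
  exists u, y, y, y, (/ l), 0. do 4 (split; [assumption|]).
  destruct v as [v0 v1]. unfold vadd, vscal, vsub, u; simpl. f_equal; field; lra.
Qed.

Lemma span_line (Fc : R2 -> Prop) a b u1 u2 : snd a <> 0 ->
  (forall w, Fc w -> dot a w = b) -> Fc u1 -> Fc u2 -> u1 <> u2 ->
  let n := sqrt (fst a * fst a + snd a * snd a) in
  forall v, span_face Fc v <-> exists k, v = vscal k (snd a / n, - fst a / n).
Proof.
  intros Ha HFc H1 H2 Ne n v.
  set (a0' := fst a) in *. set (a1' := snd a) in *.
  assert (Hpos : 0 < a0'*a0' + a1'*a1') by nra.
  assert (Hn : 0 < n) by (apply sqrt_lt_R0; exact Hpos).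
  assert (Hdiff : forall w x, Fc w -> Fc x -> a1' * (snd w - snd x) = - a0' * (fst w - fst x)).
  { intros w x Hw Hx. apply HFc in Hw, Hx. unfold dot in Hw, Hx. fold a0' a1' in Hw, Hx. lra. }
  split.
  - intros [w1 [x1 [w2 [x2 [s [t [Hw1 [Hx1 [Hw2 [Hx2 Ev]]]]]]]]]].
    pose proof (Hdiff w1 x1 Hw1 Hx1). pose proof (Hdiff w2 x2 Hw2 Hx2).
    exists (n * (s * (fst w1 - fst x1) + t * (fst w2 - fst x2)) / a1').
    subst v. unfold vadd, vscal, vsub; simpl. f_equal; [field; split; lra|].
    apply (Rmult_eq_reg_l a1'); [|exact Ha].
    transitivity (s * (a1' * (snd w1 - snd x1)) + t * (a1' * (snd w2 - snd x2))); [ring|].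
    rewrite H, H0. field. split; lra.
  - intros [k ->].
    set (d0 := fst u1 - fst u2).
    assert (Hsnd : a1' * (snd u1 - snd u2) = - a0' * d0) by (apply Hdiff; assumption).
    assert (Hd0 : d0 <> 0).
    { intros Z. apply Ne. rewrite Z in Hsnd.
      assert (snd u1 = snd u2) by (apply (Rmult_eq_reg_l a1'); [lra| exact Ha]).
      destruct u1, u2; unfold d0 in Z; simpl in *. f_equal; lra. }
    exists u1, u2, u1, u1, (k * a1' / (n * d0)), 0.
    do 4 (split; [assumption|]).
    unfold vadd, vscal, vsub; simpl. f_equal.
    + unfold d0. field. repeat split; try exact Hd0; try exact Ha; lra.
    + apply (Rmult_eq_reg_l a1'); [|exact Ha]. symmetry.
      transitivity (k * a1' / (n * d0) * (a1' * (snd u1 - snd u2))); [ring|].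
      rewrite Hsnd. field. repeat split; try exact Hd0; try exact Ha; lra.
Qed.

Lemma quad_of_dot D u a : snd a <> 0 ->
  let n := sqrt (fst a * fst a + snd a * snd a) in
  let e := (snd a / n, - fst a / n) in
  0 < dot e (mat_app ((mA0 D u, mB0 D u), (mA1 D u, mB1 D u)) e) -> 0 < quad D u (slope a).
Proof.
  intros Ha n e Hd.
  assert (Hpos : 0 < fst a * fst a + snd a * snd a) by nra.
  assert (Hn : 0 < n) by (apply sqrt_lt_R0; exact Hpos).
  assert (Hnn : n * n = fst a * fst a + snd a * snd a) by (apply sqrt_sqrt; lra).
  unfold e, dot, mat_app in Hd; simpl in Hd.
  assert (E : quad D u (slope a) = (n*n/(snd a * snd a)) *
     ((snd a / n) * (mA0 D u * (snd a / n) + mB0 D u * (- fst a / n)) +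
      (- fst a / n) * (mA1 D u * (snd a / n) + mB1 D u * (- fst a / n)))).
  { unfold quad, slope. field. split; lra. }
  rewrite E. apply Rmult_lt_0_compat; [apply Rdiv_lt_0_compat; nra| exact Hd].
Qed.

Lemma edge_is_face H a b u : In (a,b) H -> a <> (0,0) -> in_poly H u -> dot a u = b ->
  is_face (in_poly H) (fun w => in_poly H w /\ dot a w = b).
Proof.
  intros Hab Ha Hu Eu. right. exists a, b. split; [exact Ha|].
  split; [intros w Hw; apply (Hw (a,b) Hab)|]. split; [exists u; auto|]. tauto.
Qed.

Lemma scaled_deriv (G : R -> R) l c s : derivable_pt_lim G s l -> derivable_pt_lim (fun x => c * G x) s (l * c).
Proof. intros Hd. rewrite Rmult_comm. apply (derivable_pt_lim_scal G c s l Hd). Qed.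

Lemma model_sep_hyp p F f H sw : model p F f -> is_polytope H -> cont_on (in_poly H) (dPi p f) ->
  (forall Fc, is_face (in_poly H) Fc -> forall y, Fc y -> proj_det_pos (span_face Fc) (rearrange sw (dPi p f y))) ->
  SepHyp (model_sep p F f sw) H.
Proof.
  intros Hm Hpt Hct HF. pose proof Hm as [Hp [_ [_ [Hcdf Hder]]]].
  assert (Hmono : forall d z x y, x <= y -> p d z * F d z x <= p d z * F d z y)
    by (intros d z x y L; apply Rmult_le_compat_l; [apply Hp| apply (proj1 (Hcdf d z)); exact L]).
  assert (Hnonneg : forall d z x, 0 <= fYD p f x d z)
    by (intros d z x; apply Rmult_le_pos; [apply (deriv_nonneg_of_mono (F d z) x); [apply (proj1 (Hcdf d z))| apply Hder]| apply Hp]).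
  constructor.
  1-4: intros; unfold model_sep; simpl; apply scaled_deriv, Hder.
  1-4: intros; unfold model_sep; simpl; apply Hmono; assumption.
  - destruct Hpt as [[M HM] _]. exists M. exact HM.
  - (* H itself is a face spanning the plane: positive determinant, hence positive diagonal *)
    intros u Hu.
    destruct (HF _ (or_introl (fun _ => iff_refl _)) u Hu) as [Hall _].
    specialize (Hall (span_polytope H Hpt)). rewrite (rearrange_dPi p F f sw u) in Hall.
    unfold det2 in Hall; simpl in Hall. unfold det_sep, model_sep.
    unfold mA0, mA1, mB0, mB1 in *; simpl in *.
    pose proof (Hnonneg false (fst (row_order sw)) (fst u)). pose proof (Hnonneg false (snd (row_order sw)) (fst u)).
    pose proof (Hnonneg true (fst (row_order sw)) (snd u)). pose proof (Hnonneg true (snd (row_order sw)) (snd u)).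
    split; [|split]; nra.
  - intros u Hu e He. destruct (Hct u Hu e He) as [d [Hd K]]. exists d. split; [exact Hd|].
    intros v Hv Hdv. specialize (K v Hv Hdv). apply mat_dist_entries in K. unfold dPi in K; simpl in K.
    unfold mA0, mA1, mB0, mB1; simpl. destruct sw; simpl; tauto.
  - (* an edge: its span is the line of the edge direction *)
    intros a b Hab Ha u1 u2 H1 H2 E1 E2 Ne u Hu Eu.
    assert (Ha0 : a <> (0,0)) by (intros Z; apply Ha; rewrite Z; reflexivity).
    destruct (HF _ (edge_is_face H a b u1 Hab Ha0 H1 E1) u (conj Hu Eu)) as [_ Hline].
    apply quad_of_dot; [exact Ha|]. rewrite <- rearrange_dPi. apply Hline.
    + unfold dot; simpl.
      set (n := sqrt (fst a * fst a + snd a * snd a)).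
      assert (Hpos : 0 < fst a * fst a + snd a * snd a) by nra.
      assert (Hnn : n * n = fst a * fst a + snd a * snd a) by (apply sqrt_sqrt; lra).
      assert (Hn : 0 < n) by (apply sqrt_lt_R0; exact Hpos).
      replace (snd a / n * (snd a / n) + - fst a / n * (- fst a / n)) with ((fst a * fst a + snd a * snd a) / (n * n)) by (field; lra).
      rewrite Hnn. field. lra.
    + apply (span_line _ a b u1 u2 Ha); [intros w [_ Ew]; exact Ew| auto| auto| exact Ne].
Qed.

Lemma model_sep_zero tau p F f sw y : Pi tau p F y = (0,0) ->
  G0 (model_sep p F f sw) y = tau /\ G1 (model_sep p F f sw) y = tau.
Proof. unfold Pi, Pi_comp. intros E. injection E as E0 E1. destruct sw; unfold G0, G1; simpl; lra. Qed.

Theorem theorem2 (tau : R) (p : bool -> bool -> R) (F f : bool -> bool -> R -> R) (q : R2) :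
  0 < tau < 1 ->
  model p F f ->
  (forall y, is_jacobian (Pi tau p F) y (dPi p f y)) ->
  Pi tau p F q = (0, 0) ->
  ((cont_on (fun _ => True) (dPi p f) /\ det2 (dPi p f q) <> 0 ->
    exists eps, 0 < eps /\
      forall y, dist2 y q < eps -> Pi tau p F y = (0, 0) -> y = q) /\
   (forall (Lset : R2 -> Prop) (Ls : list halfspaces),
      Lset q ->
      (forall y, Lset y -> exists H, In H Ls /\ in_poly H y) ->
      (forall H, In H Ls ->
         is_polytope H /\ in_poly H q /\ cont_on (in_poly H) (dPi p f) /\
         exists sw : bool, forall Fc, is_face (in_poly H) Fc ->
           forall y, Fc y ->
             proj_det_pos (span_face Fc)
               ((if sw then swap_rows else (fun M => M)) (dPi p f y))) ->
      forall y, Lset y -> Pi tau p F y = (0, 0) -> y = q)).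
Proof.
  intros _ Hm _ Hq. split.
  - intros [Hc Hdet]. exact (local_identification tau p F f q Hm Hq Hc Hdet).
  - (* y and q lie in a common polygon H, on which Pi - tau is an injective separable map *)
    intros Lset Ls HqL Hcov Hpoly y HyL Hy.
    destruct (Hcov y HyL) as [H [HIn HyH]].
    destruct (Hpoly H HIn) as [Hpt [HqH [Hct [sw HF]]]].
    pose proof (model_sep_hyp p F f H sw Hm Hpt Hct HF) as HC.
    destruct (model_sep_zero tau p F f sw y Hy) as [Y0 Y1].
    destruct (model_sep_zero tau p F f sw q Hq) as [Q0 Q1].
    apply (sep_injective _ H HC y q HyH HqH); congruence.
Qed.
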